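(* Let $(\mathcal A,\tau)$ be a $W^*$-probability space, $I$ a set, and $\mathbf A=(A_i)_{i\in I}$, $\mathbf B=(B_i)_{i\in I}\in\mathcal A^I$ with $\tau(A_i)\ne0$ and $\tau(B_i)\ne0$ for all $i\in I$. Then the operators $\operatorname{D}_{\tau(\mathbf A)}$, $\operatorname{D}_{\tau(\mathbf B)}$ and $\operatorname{D}_{\mathbf A/\tau(\mathbf A)}$ on $\mathbb{C}\{X_i:i\in I\}$ pairwise commute, $\operatorname{D}_{\mathbf A}=\operatorname{D}_{\tau(\mathbf A)}+\operatorname{D}_{\mathbf A/\tau(\mathbf A)}$, and $e^{\operatorname{D}_{\mathbf A}}=e^{\operatorname{D}_{\mathbf A/\tau(\mathbf A)}}e^{\operatorname{D}_{\tau(\mathbf A)}}$.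
   Context: $(\mathcal A,\tau)$: von Neumann algebra with faithful normal tracial state. $\tau(\mathbf A)$ denotes the family $(\tau(A_i)1_{\mathcal A})_{i\in I}$ and $\mathbf A/\tau(\mathbf A)$ the family $(A_i/\tau(A_i))_{i\in I}$. $\mathbb{C}\{X_i:i\in I\}$: the complex vector space with basis the formal symbols $M_0\operatorname{tr}(M_1)\cdots\operatorname{tr}(M_n)$, $n\ge0$, $M_0$ a (possibly empty) monomial in non-commuting indeterminates $(X_i)_{i\in I}$, $\{M_1,\dots,M_n\}$ an unordered multiset of non-empty monomials; product by concatenating $M_0N_0$ and merging the trace factors; $\operatorname{tr}(M_0\operatorname{tr}(M_1)\cdots\operatorname{tr}(M_n))=\operatorname{tr}(M_0)\cdots\operatorname{tr}(M_n)$, $\operatorname{tr}(1)=1$. Degree = sum of degrees of $M_0,\dots,M_n$; each $\mathbb{C}_d\{X_i:i\in J\}$ ($J$ finite, degree $\le d$) is finite-dimensional. Free cumulants $\kappa$: determined by $\tau(A_1\cdots A_n)=\sum_{\pi\in NC(n)}\prod_{V\in\pi}\kappa(A_V)$. Kreweras complement $K_\pi(\sigma)$ for $\sigma\preceq\pi$ in $NC(n)$: the largest $\rho\in NC(n)$ such that $\sigma$ on $\{1,\dots,n\}$ and $\rho$ on $\{1',\dots,n'\}$ (cyclic order $1,1',\dots,n,n'$) form a non-crossing partition finer than the partition with blocks $V\cup V'$, $V\in\pi$. Free log-cumulants: for $n\ge2$ and $\tau(A_j)=1$, $L\kappa(A_1,\dots,A_n)=\sum\frac{(-1)^{1+l}}{l}\prod_{i=1}^l\prod_{V\in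 K_{\pi_i}(\pi_{i-1})}\kappa(A_V)$ over strict chains $0_n=\pi_0\prec\pi_1\prec\dots\prec\pi_l=1_n$ in $NC(n)$; for non-zero traces $L\kappa(A_1,\dots,A_n)=L\kappa(A_1/\tau(A_1),\dots,A_n/\tau(A_n))$; $L\kappa(A)=\operatorname{Log}\tau(A)$ (principal branch) for $n=1$. $\operatorname{D}_{\mathbf C}$ for a family $\mathbf C=(C_i)$ with non-zero traces: on monomials, $\operatorname{D}_{\mathbf C}(X_{i(1)}\cdots X_{i(n)})=\sum_{m=1}^n\sum_{1\le k_1<\dots<k_m\le n}L\kappa(C_{i(k_1)},\dots,C_{i(k_m)})\,X_{i(1)}\cdots X_{i(k_1-1)}\operatorname{tr}(X_{i(k_1)}\cdots X_{i(k_2-1)})\cdots\operatorname{tr}(X_{i(k_{m-1})}\cdots X_{i(k_m-1)})\,X_{i(k_m)}\cdots X_{i(n)}$, extended linearly by $\operatorname{D}(M_0\operatorname{tr}(M_1)\cdots\operatorname{tr}(M_n))=\operatorname{D}(M_0)\operatorname{tr}(M_1)\cdots\operatorname{tr}(M_n)+\sum_jM_0\cdots\operatorname{tr}(\operatorname{D}M_j)\cdots\operatorname{tr}(M_n)$. It preserves each $\mathbb{C}_d\{X_i:i\in J\}$, and $e^{\operatorname{D}_{\mathbf C}}$ is the exponential series on each of these finite-dimensional spaces. *)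

From Stdlib Require Import Reals List Permutation Classical ClassicalEpsilon Arith.
Import ListNotations.
Set Implicit Arguments.

Definition C : Type := (R * R)%type.
Definition RtoC (x : R) : C := (x, 0%R).
Definition C0 : C := (0%R, 0%R).
Definition C1 : C := (1%R, 0%R).
Definition Cadd (z w : C) : C := (fst z + fst w, snd z + snd w)%R.
Definition Cmul (z w : C) : C :=
  (fst z * fst w - snd z * snd w, fst z * snd w + snd z * fst w)%R.
Definition Copp (z : C) : C := (- fst z, - snd z)%R.
Definition Cconj (z : C) : C := (fst z, - snd z)%R.
Definition Cinv (z : C) : C :=
  let d := (fst z * fst z + snd z * snd z)%R in (fst z / d, - snd z / d)%R.
Definition Cmod (z : C) : R := sqrt (fst z * fst z + snd z * snd z)%R.
(* principal argument, in (-PI, PI] *)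
Definition Carg (z : C) : R :=
  let x := fst z in let y := snd z in
  match Rlt_dec 0 x with
  | left _ => atan (y / x)
  | right _ =>
    match Rlt_dec x 0 with
    | left _ => match Rle_dec 0 y with
                | left _ => (atan (y / x) + PI)%R
                | right _ => (atan (y / x) - PI)%R end
    | right _ => match Rlt_dec 0 y with
                 | left _ => (PI / 2)%R
                 | right _ => match Rlt_dec y 0 with
                              | left _ => (- (PI / 2))%R
                              | right _ => 0%R end end
    end
  end.
Definition CLog (z : C) : C := (ln (Cmod z), Carg z).
Definition Csum (l : list C) : C := fold_right Cadd C0 l.
Definition Cprod (l : list C) : C := fold_right Cmul C1 l.
Definition Ccv (u : nat -> C) (z : C) : Prop :=
  Un_cv (fun N => fst (u N)) (fst z) /\ Un_cv (fun N => snd (u N)) (snd z).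

(* Tracial *-probability space (algebraic surrogate of a W*-probability *)
Record StarProbSpace := {
  alg :> Type;
  a_add : alg -> alg -> alg;
  a_mul : alg -> alg -> alg;
  a_zero : alg;
  a_one : alg;
  a_opp : alg -> alg;
  a_scal : C -> alg -> alg;
  a_star : alg -> alg;
  tau : alg -> C;
  ax_add_assoc : forall a b c, a_add a (a_add b c) = a_add (a_add a b) c;
  ax_add_comm : forall a b, a_add a b = a_add b a;
  ax_add_0 : forall a, a_add a_zero a = a;
  ax_add_opp : forall a, a_add a (a_opp a) = a_zero;
  ax_mul_assoc : forall a b c, a_mul a (a_mul b c) = a_mul (a_mul a b) c;
  ax_mul_1l : forall a, a_mul a_one a = a;
  ax_mul_1r : forall a, a_mul a a_one = a;
  ax_mul_addl : forall a b c, a_mul (a_add a b) c = a_add (a_mul a c) (a_mul b c);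
  ax_mul_addr : forall a b c, a_mul a (a_add b c) = a_add (a_mul a b) (a_mul a c);
  ax_scal_1 : forall a, a_scal C1 a = a;
  ax_scal_mul : forall c d a, a_scal (Cmul c d) a = a_scal c (a_scal d a);
  ax_scal_addC : forall c d a, a_scal (Cadd c d) a = a_add (a_scal c a) (a_scal d a);
  ax_scal_addA : forall c a b, a_scal c (a_add a b) = a_add (a_scal c a) (a_scal c b);
  ax_scal_mull : forall c a b, a_mul (a_scal c a) b = a_scal c (a_mul a b);
  ax_scal_mulr : forall c a b, a_mul a (a_scal c b) = a_scal c (a_mul a b);
  ax_star_invol : forall a, a_star (a_star a) = a;
  ax_star_add : forall a b, a_star (a_add a b) = a_add (a_star a) (a_star b);
  ax_star_mul : forall a b, a_star (a_mul a b) = a_mul (a_star b) (a_star a);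
  ax_star_scal : forall c a, a_star (a_scal c a) = a_scal (Cconj c) (a_star a);
  ax_tau_add : forall a b, tau (a_add a b) = Cadd (tau a) (tau b);
  ax_tau_scal : forall c a, tau (a_scal c a) = Cmul c (tau a);
  ax_tau_one : tau a_one = C1;
  ax_tau_trace : forall a b, tau (a_mul a b) = tau (a_mul b a);
  ax_tau_pos : forall a, snd (tau (a_mul (a_star a) a)) = 0%R
                         /\ (0 <= fst (tau (a_mul (a_star a) a)))%R;
  ax_tau_faithful : forall a, tau (a_mul (a_star a) a) = C0 -> a = a_zero
}.

Definition aprod (Sp : StarProbSpace) (l : list Sp) : Sp :=
  fold_right (@a_mul Sp) (@a_one Sp) l.

(* A partition is a list of blocks; blocks are increasing lists.       *)
Definition partition := list (list nat).

Fixpoint add_to_block (j x : nat) (p : partition) : partition :=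
  match p, j with
  | [], _ => []
  | b :: p', 0 => (b ++ [x]) :: p'
  | b :: p', S j' => b :: add_to_block j' x p'
  end.

(* all set partitions of {0,...,n-1}, each exactly once *)
Fixpoint set_partitions (n : nat) : list partition :=
  match n with
  | 0 => [ [] ]
  | S m => flat_map (fun p => (p ++ [[m]]) ::
                      map (fun j => add_to_block j m p) (seq 0 (length p)))
                    (set_partitions m)
  end.

Definition crossing_pair (b c : list nat) : bool :=
  existsb (fun a => existsb (fun x => existsb (fun d => existsb (fun y =>
     (Nat.ltb a x && Nat.ltb x d && Nat.ltb d y)%bool) c) b) c) b.

Definition noncrossing (p : partition) : bool :=
  forallb (fun i => forallb (fun j =>
      (Nat.eqb i j || negb (crossing_pair (nth i p []) (nth j p [])))%bool)
    (seq 0 (length p))) (seq 0 (length p)).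

Definition NC (n : nat) : list partition := filter noncrossing (set_partitions n).

Definition incl_b (b c : list nat) : bool :=
  forallb (fun x => existsb (Nat.eqb x) c) b.
Definition finer (p q : partition) : bool :=
  forallb (fun b => existsb (fun c => incl_b b c) q) p.
Definition strictly_finer (p q : partition) : bool :=
  (finer p q && negb (finer q p))%bool.

Definition one_n (n : nat) : partition := [seq 0 n].
Definition zero_n (n : nat) : partition := map (fun i => [i]) (seq 0 n).

(* strict chains p = π_0 ≺ π_1 ≺ ... ≺ π_l = 1_n in NC(n), l >= 1,
   returned as the lists [π_1; ...; π_l]; a strict chain in NC(n) has
   length at most n-1, so fuel n suffices. *)
Fixpoint chains_from (n fuel : nat) (p : partition) : list (list partition) :=
  match fuel with
  | 0 => []
  | S f => flat_map (fun q =>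
             if strictly_finer p q then
               (if finer (one_n n) q then [[q]]
                else map (cons q) (chains_from n f q))
             else []) (NC n)
  end.

Definition strict_chains (n : nat) : list (list partition) :=
  chains_from n n (zero_n n).

(* Kreweras complement K_pi(sigma): the largest rho in NC(n) such that
   sigma (on points 2i) and rho (on points 2i+1) together form a
   non-crossing partition finer than {V ∪ V' : V ∈ pi}. *)
Definition interleave (s r : partition) : partition :=
  map (map (fun i => 2 * i)) s ++ map (map (fun i => 2 * i + 1)) r.
Definition krew_ok (pi sigma rho : partition) : bool :=
  (finer sigma pi && finer rho pi && noncrossing (interleave sigma rho))%bool.
Definition kreweras (n : nat) (pi sigma : partition) : partition :=
  match find (fun rho => (krew_ok pi sigma rho &&
                forallb (fun rho' => negb (krew_ok pi sigma rho') || finer rho' rho)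
                        (NC n))%bool) (NC n) with
  | Some r => r
  | None => []
  end.

Definition sub (Sp : StarProbSpace) (l : list Sp) (V : list nat) : list Sp :=
  map (fun i => nth i l (@a_one Sp)) V.

Fixpoint kappa_f (Sp : StarProbSpace) (fuel : nat) (l : list Sp) : C :=
  match fuel with
  | 0 => C0
  | S f =>
    Cadd (@tau Sp (@aprod Sp l))
      (Copp (Csum (map (fun p => Cprod (map (fun V => @kappa_f Sp f (@sub Sp l V)) p))
                 (filter (fun p => negb (finer (one_n (length l)) p))
                         (NC (length l))))))
  end.
Definition kappa (Sp : StarProbSpace) (l : list Sp) : C := @kappa_f Sp (length l) l.

(* chain formula, for n >= 2 and unit traces *)
Definition Lkappa_unit (Sp : StarProbSpace) (l : list Sp) : C :=
  let n := length l in
  Csum (map (fun ch =>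
      let lc := length ch in
      Cmul (RtoC (pow (-1) (S lc) / INR lc)%R)
        (Cprod (map (fun pc => Cprod (map (fun V => @kappa Sp (@sub Sp l V))
                                         (kreweras n (snd pc) (fst pc))))
                    (combine (zero_n n :: ch) ch))))
    (strict_chains n)).

Definition Lkappa (Sp : StarProbSpace) (l : list Sp) : C :=
  match l with
  | [] => C0
  | [a] => CLog (@tau Sp a)
  | _ => @Lkappa_unit Sp (map (fun a => @a_scal Sp (Cinv (@tau Sp a)) a) l)
  end.

Definition tau_fam (Sp : StarProbSpace) (I : Type) (A : I -> Sp) : I -> Sp :=
  fun i => @a_scal Sp (@tau Sp (A i)) (@a_one Sp).
Definition norm_fam (Sp : StarProbSpace) (I : Type) (A : I -> Sp) : I -> Sp :=
  fun i => @a_scal Sp (Cinv (@tau Sp (A i))) (A i).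

(* A basis element M_0 tr(M_1)...tr(M_n) is a key (M_0, [M_1;...;M_n]); *)
(* keys are identified up to permutation of the trace factors.         *)
(* A trace polynomial is a finite formal linear combination of keys.   *)
Definition key (I : Type) : Type := (list I * list (list I))%type.
Definition tpoly (I : Type) : Type := list (C * key I).

Fixpoint sublists (T : Type) (l : list T) : list (list T) :=
  match l with
  | [] => [[]]
  | x :: t => map (cons x) (sublists t) ++ sublists t
  end.

Section DOp.
Variables (Sp : StarProbSpace) (I : Type) (Cf : I -> Sp).

(* D_C on a monomial X_{i(1)}...X_{i(n)} (0-based indices k_1<...<k_m) *)
Definition D_mono (w : list I) : tpoly I :=
  flat_map (fun ks => match ks with
    | [] => []
    | k1 :: _ =>
      [(@Lkappa Sp (map (fun k => nth k (map Cf w) (@a_one Sp)) ks),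
        (firstn k1 w ++ skipn (last ks 0) w,
         map (fun ab => firstn (snd ab - fst ab) (skipn (fst ab) w))
             (combine ks (tl ks))))]
    end) (sublists (seq 0 (length w))).

(* tr(N_0 tr(N_1)...tr(N_k)) = tr(N_0)...tr(N_k), with tr(1) = 1 *)
Definition tr_tpoly (v : tpoly I) : tpoly I :=
  map (fun ck => (fst ck, ([] : list I,
        match fst (snd ck) with [] => snd (snd ck) | Mh :: Mt => (Mh :: Mt) :: snd (snd ck) end)))
      v.

Definition D_key (k : key I) : tpoly I :=
  let M0 := fst k in let Ts := snd k in
  map (fun ck => (fst ck, (fst (snd ck), snd (snd ck) ++ Ts))) (D_mono M0)
  ++ flat_map (fun j =>
       map (fun ck => (fst ck, (M0 ++ fst (snd ck),
                                (firstn j Ts ++ skipn (S j) Ts) ++ snd (snd ck))))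
           (tr_tpoly (D_mono (nth j Ts []))))
     (seq 0 (length Ts)).

Definition Dop (v : tpoly I) : tpoly I :=
  flat_map (fun ck => map (fun dk => (Cmul (fst ck) (fst dk), snd dk)) (D_key (snd ck))) v.
End DOp.

Section TPoly.
Variable I : Type.

Definition key_equiv (k k' : key I) : Prop :=
  fst k = fst k' /\ Permutation (snd k) (snd k').

Definition coeff (v : tpoly I) (k : key I) : C :=
  Csum (map (fun ck => if excluded_middle_informative (key_equiv k (snd ck))
                       then fst ck else C0) v).

Definition tp_eq (v w : tpoly I) : Prop := forall k, coeff v k = coeff w k.

(* genuine elements: trace factors are non-empty monomials *)
Definition tp_valid (v : tpoly I) : Prop :=
  forall ck, In ck v -> forall M, In M (snd (snd ck)) -> M <> [].

Definition commutes (D1 D2 : tpoly I -> tpoly I) : Prop :=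
  forall v, tp_valid v -> tp_eq (D1 (D2 v)) (D2 (D1 v)).

(* exp_series D v w : the exponential series sum_j D^j v / j! converges
   (coefficientwise, i.e. in the finite-dimensional space
   C_d{X_i : i in J} containing v) to w;  i.e. w = e^D v. *)
Definition exp_partial (D : tpoly I -> tpoly I) (v : tpoly I) (k : key I) (N : nat) : C :=
  Csum (map (fun j => Cmul (RtoC (/ INR (fact j))%R) (coeff (Nat.iter j D v) k))
            (seq 0 (S N))).
Definition exp_series (D : tpoly I -> tpoly I) (v w : tpoly I) : Prop :=
  forall k, Ccv (exp_partial D v k) (coeff w k).
End TPoly.

(* Proposition 2.14.  For a basis element k of C{X_i : i in I}, let lambda(k)
   be the sum of Log tau(A_i) over the letters X_i of k.
   (1) The unit has vanishing free cumulants of order >= 2, and every chain term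
       of a log-cumulant contains kappa over the blocks of K_{pi_1}(0_n), one of
       size >= 2; so the scalar family tau(A) has no log-cumulant of order >= 2
       and D_{tau(A)} is diagonal: it multiplies k by lambda(k).
   (2) Every D_C only cuts and regroups letters, so a letter-invariant diagonal
       operator commutes with it.  Log-cumulants of order >= 2 only see A/tau(A),
       and Log tau(A_i/tau(A_i)) = 0, whence D_A = D_{tau(A)} + D_{A/tau(A)}.
   (3) D_{A/tau(A)} has no order-one part, so it creates a trace factor at each
       step and is nilpotent on trace polynomials of bounded degree.
   The exponential identity follows coefficientwise from the binomial expansion
   of (lambda + N)^j and a Cauchy product with exp(lambda), finite by (3). *)

From Stdlib Require Import Reals List Permutation Classical ClassicalEpsilon Arith.
From Stdlib Require Import Lia Lra Ring Bool.
Import ListNotations.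
Set Implicit Arguments.

Lemma Ceq (a b : C) : fst a = fst b -> snd a = snd b -> a = b.
Proof. destruct a, b; simpl; intros; subst; reflexivity. Qed.

Definition Csub (x y : C) : C := Cadd x (Copp y).

Lemma C_ring_theory : ring_theory C0 C1 Cadd Cmul Csub Copp (@eq C).
Proof.
  constructor; intros; apply Ceq; destruct x; try destruct y; try destruct z;
    unfold Csub, Cadd, Cmul, Copp, C0, C1; simpl; ring.
Qed.
Add Ring C_ring : C_ring_theory.

Lemma Cmul_comm a b : Cmul a b = Cmul b a.
Proof. ring. Qed.

Lemma Cinv_l z : z <> C0 -> Cmul (Cinv z) z = C1.
Proof.
  destruct z as [x y]; intro Hz. unfold Cinv, Cmul, C1; simpl.
  assert (x * x + y * y <> 0)%R.
  { intro E. apply Hz. assert (x = 0 /\ y = 0)%R as [-> ->] by nra. reflexivity. }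
  apply Ceq; simpl; field; auto.
Qed.

Lemma Cinv_C1 : Cinv C1 = C1.
Proof. unfold Cinv, C1; apply Ceq; simpl; field. Qed.

Lemma CLog_C1 : CLog C1 = C0.
Proof.
  unfold CLog, Cmod, Carg, C1; simpl. apply Ceq; simpl.
  - replace (1 * 1 + 0 * 0)%R with 1%R by ring. rewrite sqrt_1, ln_1; auto.
  - destruct (Rlt_dec 0 1); [|lra]. replace (0 / 1)%R with 0%R by field. apply atan_0.
Qed.

Lemma RtoC_add a b : RtoC (a + b) = Cadd (RtoC a) (RtoC b).
Proof. unfold RtoC, Cadd; apply Ceq; simpl; ring. Qed.

Lemma RtoC_mul a b : RtoC (a * b) = Cmul (RtoC a) (RtoC b).
Proof. unfold RtoC, Cmul; apply Ceq; simpl; ring. Qed.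

Lemma Csum_app l1 l2 : Csum (l1 ++ l2) = Cadd (Csum l1) (Csum l2).
Proof. induction l1; simpl. ring. rewrite IHl1. ring. Qed.

Lemma Csum_map_add {T} (f g : T -> C) l :
  Csum (map (fun x => Cadd (f x) (g x)) l) = Cadd (Csum (map f l)) (Csum (map g l)).
Proof. induction l; simpl. ring. rewrite IHl; ring. Qed.

Lemma Csum_map_mul {T} c (f : T -> C) l :
  Csum (map (fun x => Cmul c (f x)) l) = Cmul c (Csum (map f l)).
Proof. induction l; simpl. ring. rewrite IHl; ring. Qed.

Lemma Csum_map_ext {T} (f g : T -> C) l :
  (forall x, In x l -> f x = g x) -> Csum (map f l) = Csum (map g l).
Proof. intro H; induction l; simpl; auto. rewrite H, IHl; auto with datatypes. Qed.

Lemma Csum_map_zero {T} (f : T -> C) l :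
  (forall x, In x l -> f x = C0) -> Csum (map f l) = C0.
Proof. intro H; induction l; simpl; auto. rewrite H, IHl; auto with datatypes. ring. Qed.

Lemma Csum_flat_map {T U} (h : T -> list U) (f : U -> C) l :
  Csum (map f (flat_map h l)) = Csum (map (fun x => Csum (map f (h x))) l).
Proof. induction l; simpl; auto. rewrite map_app, Csum_app, IHl; auto. Qed.

Lemma Csum_concat {T} (f : T -> C) (L : list (list T)) :
  Csum (map (fun M => Csum (map f M)) L) = Csum (map f (concat L)).
Proof. induction L; simpl; auto. rewrite map_app, Csum_app, IHL; auto. Qed.

Lemma Csum_perm (l l' : list C) : Permutation l l' -> Csum l = Csum l'.
Proof. induction 1; simpl; try ring; congruence. Qed.

Lemma Csum_cons x l : Csum (x :: l) = Cadd x (Csum l).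
Proof. reflexivity. Qed.

Lemma Csum_filter {T} (f : T -> C) p l :
  (forall x, In x l -> p x = false -> f x = C0) ->
  Csum (map f (filter p l)) = Csum (map f l).
Proof.
  intro H. induction l as [|x l IH]; [reflexivity|]. cbn [filter].
  assert (IH' : Csum (map f (filter p l)) = Csum (map f l)) by auto with datatypes.
  destruct (p x) eqn:E; cbn [map]; rewrite ?Csum_cons, IH'; [reflexivity|].
  rewrite (H x); auto with datatypes. ring.
Qed.

Lemma Cprod_zero {T} (f : T -> C) l x : In x l -> f x = C0 -> Cprod (map f l) = C0.
Proof.
  intros Hx Hf. induction l as [|y l IH]; simpl in *; [tauto|].
  destruct Hx as [->|Hx]; [rewrite Hf|rewrite IH by auto]; ring.
Qed.

(** * Free cumulants of the unit vanish in order >= 2 *)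

Lemma incl_b_spec b c : incl_b b c = true <-> (forall x, In x b -> In x c).
Proof.
  unfold incl_b; rewrite forallb_forall; split; intros H x Hx.
  - specialize (H x Hx). apply existsb_exists in H as [y [Hy E]].
    apply Nat.eqb_eq in E; subst; auto.
  - apply existsb_exists. exists x; split; auto. apply Nat.eqb_refl.
Qed.

Lemma finer_spec p q :
  finer p q = true <-> (forall b, In b p -> exists c, In c q /\ incl_b b c = true).
Proof.
  unfold finer; rewrite forallb_forall; split; intros H b Hb; specialize (H b Hb);
    apply existsb_exists in H || apply existsb_exists; auto.
Qed.

Lemma finer_refl p : finer p p = true.
Proof. apply finer_spec; intros b Hb; exists b; split; auto. apply incl_b_spec; auto. Qed.

Lemma crossing_spec b c : crossing_pair b c = true <->
  exists a x d y, In a b /\ In x c /\ In d b /\ In y c /\ a < x /\ x < d /\ d < y.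
Proof.
  unfold crossing_pair; split.
  - intro H. apply existsb_exists in H as [a [Ha H]].
    apply existsb_exists in H as [x [Hx H]].
    apply existsb_exists in H as [d [Hd H]].
    apply existsb_exists in H as [y [Hy H]].
    apply andb_prop in H as [H H3]. apply andb_prop in H as [H1 H2].
    apply Nat.ltb_lt in H1, H2, H3. exists a, x, d, y; tauto.
  - intros [a [x [d [y [Ha [Hx [Hd [Hy [H1 [H2 H3]]]]]]]]]].
    apply existsb_exists; exists a; split; auto.
    apply existsb_exists; exists x; split; auto.
    apply existsb_exists; exists d; split; auto.
    apply existsb_exists; exists y; split; auto.
    apply Nat.ltb_lt in H1, H2, H3. rewrite H1, H2, H3; reflexivity.
Qed.

Lemma noncrossing_spec p : noncrossing p = true <->
  (forall i j, i < length p -> j < length p -> i <> j ->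
     crossing_pair (nth i p []) (nth j p []) = false).
Proof.
  unfold noncrossing; rewrite forallb_forall; split.
  - intros H i j Hi Hj Hij.
    assert (H1 := H i (proj2 (in_seq _ _ _) (conj (Nat.le_0_l _) Hi))).
    rewrite forallb_forall in H1.
    specialize (H1 j (proj2 (in_seq _ _ _) (conj (Nat.le_0_l _) Hj))).
    apply orb_prop in H1 as [H1|H1]; [apply Nat.eqb_eq in H1; lia|].
    apply negb_true_iff in H1; auto.
  - intros H i Hi. apply forallb_forall. intros j Hj.
    apply in_seq in Hi, Hj. destruct (Nat.eq_dec i j); [subst; rewrite Nat.eqb_refl; auto|].
    rewrite H by lia. apply orb_true_r.
Qed.

Lemma crossing_singleton_l a c : crossing_pair [a] c = false.
Proof.
  apply not_true_is_false; intro H; apply crossing_spec in H.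
  destruct H as [a' [x [d [y [H1 [_ [H3 [_ [? [? ?]]]]]]]]]].
  destruct H1 as [H1|[]], H3 as [H3|[]]; lia.
Qed.

Lemma crossing_singleton_r a b : crossing_pair b [a] = false.
Proof.
  apply not_true_is_false; intro H; apply crossing_spec in H.
  destruct H as [a' [x [d [y [_ [H1 [_ [H3 [? [? ?]]]]]]]]]].
  destruct H1 as [H1|[]], H3 as [H3|[]]; lia.
Qed.

Lemma crossing_map f b c : (forall a x, a < x <-> f a < f x) ->
  crossing_pair (map f b) (map f c) = true -> crossing_pair b c = true.
Proof.
  intros Hf H. apply crossing_spec in H as [a [x [d [y [Ha [Hx [Hd [Hy [H1 [H2 H3]]]]]]]]]].
  apply in_map_iff in Ha as [a' [<- Ha]]. apply in_map_iff in Hx as [x' [<- Hx]].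
  apply in_map_iff in Hd as [d' [<- Hd]]. apply in_map_iff in Hy as [y' [<- Hy]].
  apply crossing_spec. exists a', x', d', y'. repeat split; auto; apply Hf; auto.
Qed.

Definition wf_partition (n : nat) (p : partition) : Prop :=
  (forall b, In b p -> b <> []) /\ (forall b x, In b p -> In x b -> x < n) /\ NoDup (concat p).

Lemma add_to_block_in j x p b : In b (add_to_block j x p) ->
  In b p \/ exists b0, In b0 p /\ b = b0 ++ [x].
Proof.
  revert j; induction p as [|b1 p IH]; intros j H; simpl in *; [destruct j; simpl in H; tauto|].
  destruct j; simpl in H.
  - destruct H as [H|H]; [right; exists b1; split; auto|tauto].
  - destruct H as [H|H]; auto. destruct (IH _ H) as [H1|[b0 [H1 H2]]]; eauto.
Qed.

Lemma add_to_block_concat j x p : j < length p ->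
  Permutation (concat (add_to_block j x p)) (x :: concat p).
Proof.
  revert j; induction p as [|b1 p IH]; intros j H; simpl in *; [lia|].
  destruct j; simpl.
  - rewrite <- app_assoc. simpl. apply Permutation_sym, Permutation_middle.
  - change (x :: b1 ++ concat p) with ((x :: b1) ++ concat p).
    eapply perm_trans; [apply Permutation_app_head, IH; lia|].
    apply Permutation_sym, Permutation_middle.
Qed.

Lemma set_partitions_wf n p : In p (set_partitions n) -> wf_partition n p.
Proof.
  revert p; induction n as [|m IH]; intros p H; simpl in H.
  - destruct H as [H|[]]; subst. split; [|split]; simpl; try tauto. constructor.
  - apply in_flat_map in H as [p0 [Hp0 H]]. destruct (IH _ Hp0) as [H1 [H2 H3]].
    destruct H as [H|H].
    + subst. split; [|split].
      * intros b Hb; apply in_app_or in Hb as [Hb|[Hb|[]]]; subst; auto. discriminate.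
      * intros b x Hb Hx; apply in_app_or in Hb as [Hb|[Hb|[]]]; subst.
        -- specialize (H2 _ _ Hb Hx); lia.
        -- destruct Hx as [Hx|[]]; lia.
      * rewrite concat_app; simpl. apply NoDup_app; auto.
        { repeat constructor; auto. }
        intros x Hx Hx'. destruct Hx' as [Hx'|[]]; subst.
        apply in_concat in Hx as [b [Hb Hx]]. specialize (H2 _ _ Hb Hx); lia.
    + apply in_map_iff in H as [j [Hj Hjs]]. apply in_seq in Hjs. subst. split; [|split].
      * intros b Hb; apply add_to_block_in in Hb as [Hb|[b0 [Hb0 Hb]]]; auto.
        subst; destruct b0; discriminate.
      * intros b x Hb Hx; apply add_to_block_in in Hb as [Hb|[b0 [Hb0 Hb]]].
        -- specialize (H2 _ _ Hb Hx); lia.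
        -- subst. apply in_app_or in Hx as [Hx|[Hx|[]]]; [specialize (H2 _ _ Hb0 Hx)|]; lia.
      * eapply Permutation_NoDup; [apply Permutation_sym, add_to_block_concat; lia|].
        constructor; auto. intro Hx. apply in_concat in Hx as [b [Hb Hx]].
        specialize (H2 _ _ Hb Hx); lia.
Qed.

Lemma NC_set_partitions n p : In p (NC n) -> In p (set_partitions n).
Proof. unfold NC; intro H; apply filter_In in H; tauto. Qed.

Lemma block_length_bounds n p b : wf_partition n p -> In b p ->
  finer (one_n n) p = false -> 1 <= length b < n.
Proof.
  intros [H1 [H2 H3]] Hb Hf.
  assert (Hnd : NoDup b).
  { clear -H3 Hb. induction p; simpl in *; [tauto|].
    destruct Hb; subst; [eapply NoDup_app_remove_r; eauto|].
    apply IHp; auto. eapply NoDup_app_remove_l; eauto. }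
  assert (Hinc : incl b (seq 0 n)).
  { intros x Hx; apply in_seq; specialize (H2 _ _ Hb Hx); lia. }
  split; [destruct b; simpl; [now elim (H1 [] Hb)|lia]|].
  assert (length b <= n) by (rewrite <- (length_seq n 0); apply NoDup_incl_length; auto).
  destruct (Nat.eq_dec (length b) n); [|lia]. exfalso.
  assert (incl (seq 0 n) b) by (apply NoDup_length_incl; auto; rewrite length_seq; lia).
  enough (finer (one_n n) p = true) by congruence.
  apply finer_spec. intros b' [Hb'|[]]; subst. exists b; split; auto.
  apply incl_b_spec; auto.
Qed.

Definition all_singletons (p : partition) : bool := forallb (fun b => Nat.eqb (length b) 1) p.
Definition singleton_weight (p : partition) : C := if all_singletons p then C1 else C0.

Lemma all_singletons_nth p i : all_singletons p = true -> i < length p ->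
  exists a, nth i p [] = [a].
Proof.
  intros H Hi. unfold all_singletons in H. rewrite forallb_forall in H.
  specialize (H _ (nth_In p [] Hi)). apply Nat.eqb_eq in H.
  destruct (nth i p []) as [|a [|]]; simpl in H; try discriminate. eauto.
Qed.

Lemma all_singletons_add_to_block j x p : (forall b, In b p -> b <> []) -> j < length p ->
  all_singletons (add_to_block j x p) = false.
Proof.
  intros Hne; revert j; induction p as [|b p IH]; intros j Hj; simpl in *; [lia|].
  destruct j; simpl.
  - rewrite length_app; simpl. destruct b; [now elim (Hne [] (or_introl eq_refl))|].
    simpl. replace (length b + 1) with (S (length b)) by lia. destruct (length b); reflexivity.
  - rewrite IH; [apply andb_false_r|auto|lia].
Qed.

(* 0_n is the only all-singleton partition in the enumeration, listed once. *)
Lemma sum_singleton_weight n : Csum (map singleton_weight (set_partitions n)) = C1.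
Proof.
  induction n as [|m IH]; [cbn; ring|].
  simpl. rewrite Csum_flat_map, <- IH. apply Csum_map_ext. intros p Hp.
  destruct (set_partitions_wf _ _ Hp) as [Hne _]. simpl. rewrite Csum_map_zero.
  - unfold singleton_weight, all_singletons. rewrite forallb_app. simpl.
    rewrite andb_true_r. ring.
  - intros q Hq. apply in_map_iff in Hq as [j [Hj Hjs]]; subst. apply in_seq in Hjs.
    unfold singleton_weight. rewrite all_singletons_add_to_block; auto. lia.
Qed.

Lemma all_singletons_noncrossing p : all_singletons p = true -> noncrossing p = true.
Proof.
  intro H; apply noncrossing_spec; intros i j Hi _ _.
  destruct (all_singletons_nth _ H Hi) as [a ->]; apply crossing_singleton_l.
Qed.

Lemma all_singletons_not_one n p : 2 <= n -> all_singletons p = true ->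
  finer (one_n n) p = false.
Proof.
  intros Hn H. apply not_true_is_false; intro F; rewrite finer_spec in F.
  destruct (F (seq 0 n) (or_introl eq_refl)) as [c [Hc Hi]].
  unfold all_singletons in H; rewrite forallb_forall in H.
  specialize (H _ Hc). apply Nat.eqb_eq in H.
  rewrite incl_b_spec in Hi. destruct c as [|a [|]]; simpl in H; try discriminate.
  assert (H0 := Hi 0 ltac:(apply in_seq; lia)). assert (H1 := Hi 1 ltac:(apply in_seq; lia)).
  destruct H0 as [H0|[]], H1 as [H1|[]]; lia.
Qed.

Lemma sum_singleton_weight_NC n : 2 <= n ->
  Csum (map singleton_weight (filter (fun p => negb (finer (one_n n) p)) (NC n))) = C1.
Proof.
  intro Hn. rewrite <- (sum_singleton_weight n). unfold NC.
  induction (set_partitions n) as [|p l IH]; [reflexivity|].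
  cbn [filter]. destruct (all_singletons p) eqn:E.
  - rewrite (all_singletons_noncrossing _ E). cbn [filter].
    rewrite (all_singletons_not_one _ Hn E). cbn [negb map]. rewrite !Csum_cons, IH. reflexivity.
  - assert (H : singleton_weight p = C0) by (unfold singleton_weight; rewrite E; auto).
    destruct (noncrossing p); cbn [filter]; [destruct (finer (one_n n) p); cbn [negb]|];
      cbn [map]; rewrite ?Csum_cons, ?IH, ?H; ring.
Qed.

Lemma Cprod_singleton_indicator p :
  Cprod (map (fun V => if Nat.eqb (length V) 1 then C1 else C0) p) = singleton_weight p.
Proof.
  unfold singleton_weight, all_singletons. induction p as [|b p IH]; simpl; [reflexivity|].
  rewrite IH. destruct (length b =? 1), (forallb _ p); simpl; ring.
Qed.

Section Unit.
Variable Sp : StarProbSpace.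

Definition ones (m : nat) : list Sp := repeat (@a_one Sp) m.

Lemma sub_ones m V : @sub Sp (ones m) V = ones (length V).
Proof. unfold sub, ones. rewrite <- map_const. apply map_ext. intro; apply nth_repeat. Qed.

Lemma aprod_ones m : @aprod Sp (ones m) = @a_one Sp.
Proof.
  induction m; simpl; auto. unfold aprod in *; simpl. unfold ones in IHm.
  rewrite IHm. apply ax_mul_1l.
Qed.

(* kappa(1) = 1 and kappa(1,...,1) = 0 in order >= 2, by strong induction:
   the recursion leaves tau(1) minus the weight of 0_n. *)
Lemma kappa_f_ones f m : 1 <= m <= f ->
  @kappa_f Sp f (ones m) = if Nat.eqb m 1 then C1 else C0.
Proof.
  revert m; induction f as [|f IH]; intros m Hm; [lia|].
  cbn [kappa_f]. replace (length (ones m)) with m by (unfold ones; rewrite repeat_length; auto).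
  rewrite aprod_ones, ax_tau_one.
  rewrite (Csum_map_ext _ singleton_weight).
  2:{ intros p Hp. apply filter_In in Hp as [Hp Hf]. apply negb_true_iff in Hf.
      rewrite <- Cprod_singleton_indicator. f_equal. apply map_ext_in. intros V HV.
      rewrite sub_ones. apply IH.
      pose proof (@block_length_bounds m p V
                    (set_partitions_wf _ _ (NC_set_partitions _ _ Hp)) HV Hf).
      lia. }
  destruct (Nat.eq_dec m 1) as [->|Hm1].
  - replace (filter (fun p => negb (finer (one_n 1) p)) (NC 1)) with (@nil partition)
      by reflexivity.
    cbn. apply Ceq; simpl; ring.
  - rewrite sum_singleton_weight_NC by lia. destruct (Nat.eqb_spec m 1); [lia|].
    apply Ceq; simpl; ring.
Qed.

Lemma kappa_ones m : 2 <= m -> @kappa Sp (ones m) = C0.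
Proof.
  intro. unfold kappa.
  replace (length (ones m)) with m by (unfold ones; rewrite repeat_length; auto).
  rewrite kappa_f_ones by lia. destruct (Nat.eqb_spec m 1); auto; lia.
Qed.
End Unit.

(** * Free log-cumulants of the families tau(A) and A/tau(A) *)

Lemma chains_from_head n fuel p ch : In ch (chains_from n fuel p) ->
  exists q rest, ch = q :: rest /\ In q (NC n) /\ strictly_finer p q = true.
Proof.
  revert p ch; induction fuel as [|f IH]; intros p ch H; cbn [chains_from] in H; [destruct H|].
  apply in_flat_map in H as [q [Hq H]]. destruct (strictly_finer p q) eqn:E; [|destruct H].
  destruct (finer (one_n n) q).
  - destruct H as [H|[]]. subst; eauto.
  - apply in_map_iff in H as [r [Hr _]]. subst; eauto.
Qed.

(* 0_n on the even points together with a non-crossing q on the odd points is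
   non-crossing: q is therefore admissible for the complement K_q(0_n). *)
Lemma interleave_zero_noncrossing n q : noncrossing q = true ->
  noncrossing (interleave (zero_n n) q) = true.
Proof.
  intro Hq. rewrite noncrossing_spec in *. unfold interleave, zero_n.
  set (X := map (map (fun i => 2 * i)) (map (fun i => [i]) (seq 0 n))).
  assert (HX : forall i, i < length X -> exists a, nth i X [] = [a]).
  { intros i Hi. unfold X in *. rewrite !length_map, length_seq in Hi.
    rewrite map_map. exists (2 * i).
    rewrite (nth_indep _ [] ((fun x => map (fun i => 2 * i) [x]) 0))
      by (rewrite length_map, length_seq; auto).
    rewrite (map_nth (fun x : nat => map (fun i0 : nat => 2 * i0) [x])), seq_nth by auto.
    reflexivity. }
  intros i j Hi Hj Hij. rewrite length_app in Hi, Hj.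
  destruct (Nat.lt_ge_cases i (length X)) as [Hi'|Hi'].
  { rewrite app_nth1 by auto. destruct (HX _ Hi') as [a ->]. apply crossing_singleton_l. }
  destruct (Nat.lt_ge_cases j (length X)) as [Hj'|Hj'].
  { rewrite (app_nth1 _ _ _ Hj'). destruct (HX _ Hj') as [a ->]. apply crossing_singleton_r. }
  rewrite !app_nth2 by auto. rewrite length_map in Hi, Hj.
  change [] with (map (fun i => 2 * i + 1) []). rewrite !map_nth.
  apply not_true_is_false; intro H. apply crossing_map in H; [|intros; lia].
  rewrite (Hq (i - length X) (j - length X)) in H by lia. discriminate.
Qed.

(* If 0_n < q in NC(n), then K_q(0_n) (which is q) has a block of size >= 2:
   it is coarser than q, and q has a non-singleton block. *)
Lemma kreweras_zero_has_big_block n q : In q (NC n) -> strictly_finer (zero_n n) q = true ->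
  exists c, In c (kreweras n q (zero_n n)) /\ 2 <= length c.
Proof.
  intros Hq Hs. unfold strictly_finer in Hs. apply andb_prop in Hs as [Hzq Hqz].
  apply negb_true_iff in Hqz.
  assert (Hok : krew_ok q (zero_n n) q = true).
  { unfold krew_ok. rewrite Hzq, finer_refl. simpl. apply interleave_zero_noncrossing.
    unfold NC in Hq. apply filter_In in Hq; tauto. }
  unfold kreweras. destruct (find _ (NC n)) as [r|] eqn:E.
  - apply find_some in E as [Hr E]. apply andb_prop in E as [_ E].
    rewrite forallb_forall in E. specialize (E q Hq). rewrite Hok in E. simpl in E.
    assert (Hbig : exists b, In b q /\ forall c, In c (zero_n n) -> incl_b b c = false).
    { apply NNPP; intro N. assert (finer q (zero_n n) = true) by
        (apply finer_spec; intros b Hb; apply NNPP; intro N2; apply N; exists b; split; auto;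
         intros c Hc; apply not_true_is_false; intro; apply N2; eauto).
      congruence. }
    destruct Hbig as [b [Hb Hbz]].
    rewrite finer_spec in E. destruct (E b Hb) as [c [Hc Hbc]]. exists c; split; auto.
    destruct (set_partitions_wf _ _ (NC_set_partitions _ _ Hr)) as [Hne [Hlt _]].
    destruct c as [|x [|y c]]; simpl; try lia; exfalso.
    + now apply (Hne [] Hc).
    + specialize (Hbz [x]). rewrite Hbc in Hbz. enough (true = false) by discriminate.
      apply Hbz. unfold zero_n. apply in_map_iff. exists x; split; auto. apply in_seq.
      specialize (Hlt _ x Hc (or_introl eq_refl)). lia.
  - exfalso. apply find_none with (x := q) in E; auto. rewrite Hok in E. simpl in E.
    enough (forallb (fun rho' => negb (krew_ok q (zero_n n) rho') || finer rho' q) (NC n) = true)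
      by congruence.
    apply forallb_forall. intros rho _. unfold krew_ok.
    destruct (finer rho q); rewrite ?andb_false_r, ?andb_true_r, ?orb_true_r; reflexivity.
Qed.

Lemma Lkappa_unit_ones Sp n : 2 <= n -> @Lkappa_unit Sp (ones Sp n) = C0.
Proof.
  intro Hn. unfold Lkappa_unit.
  replace (length (ones Sp n)) with n by (unfold ones; rewrite repeat_length; auto).
  apply Csum_map_zero. intros ch Hch.
  destruct (chains_from_head _ _ _ _ Hch) as [q [rest [-> [Hq Hs]]]].
  cbn [combine map Cprod fold_right fst snd].
  destruct (@kreweras_zero_has_big_block n q Hq Hs) as [c [Hc Hlc]].
  unfold Cprod at 2. cbn [fold_right]. fold Cprod.
  rewrite (@Cprod_zero _ _ _ c Hc); [ring|]. rewrite sub_ones. apply kappa_ones; auto.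
Qed.

Section LogCumulants.
Variables (Sp : StarProbSpace) (I : Type).

(* The log-cumulant attached by D_C to the letters ks of the word w. *)
Definition cut_weight (Cf : I -> Sp) (w : list I) (ks : list nat) : C :=
  @Lkappa Sp (map (fun k => nth k (map Cf w) (@a_one Sp)) ks).

Lemma nth_map_rel (R : Sp -> Sp -> Prop) (f g : I -> Sp) (w : list I) k :
  R (a_one Sp) (a_one Sp) -> (forall i, R (f i) (g i)) ->
  R (nth k (map f w) (a_one Sp)) (nth k (map g w) (a_one Sp)).
Proof. intros H1 H2. revert k; induction w; intros [|k]; simpl; auto. Qed.

Lemma nth_map_prop (P : Sp -> Prop) (f : I -> Sp) (w : list I) k :
  P (a_one Sp) -> (forall i, P (f i)) -> P (nth k (map f w) (a_one Sp)).
Proof. intros H1 H2. revert k; induction w; intros [|k]; simpl; auto. Qed.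

Definition normalize (a : Sp) : Sp := a_scal Sp (Cinv (tau Sp a)) a.

Lemma Lkappa_long (l : list Sp) : 2 <= length l ->
  @Lkappa Sp l = @Lkappa_unit Sp (map normalize l).
Proof. destruct l as [|a [|b t]]; simpl; intros; try lia. reflexivity. Qed.

Lemma normalize_scalar c : c <> C0 -> normalize (a_scal Sp c (a_one Sp)) = a_one Sp.
Proof.
  intro Hc. unfold normalize.
  rewrite ax_tau_scal, ax_tau_one, <- ax_scal_mul.
  replace (Cmul c C1) with c by ring. rewrite Cinv_l, ax_scal_1; auto.
Qed.

Lemma normalize_one : normalize (a_one Sp) = a_one Sp.
Proof. unfold normalize. rewrite ax_tau_one, Cinv_C1, ax_scal_1. auto. Qed.

Lemma cut_weight_single (F : I -> Sp) w k :
  cut_weight F w [k] = CLog (tau Sp (nth k (map F w) (a_one Sp))).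
Proof. reflexivity. Qed.

Variable A : I -> Sp.
Hypothesis hA : forall i, tau Sp (A i) <> C0.

Lemma cut_weight_tau_long w ks : 2 <= length ks -> cut_weight (tau_fam Sp A) w ks = C0.
Proof.
  intro Hk. unfold cut_weight. rewrite Lkappa_long by (rewrite length_map; auto).
  replace (map normalize _) with (ones Sp (length ks)); [apply Lkappa_unit_ones; auto|].
  unfold ones. rewrite map_map, <- (map_const (a_one Sp) ks). apply map_ext. intro k.
  apply (nth_map_prop (fun a => a_one Sp = normalize a)); [rewrite normalize_one; auto|].
  intro i. unfold tau_fam. rewrite normalize_scalar; auto.
Qed.

Lemma tau_norm_fam i : tau Sp (norm_fam Sp A i) = C1.
Proof. unfold norm_fam. rewrite ax_tau_scal. apply Cinv_l; auto. Qed.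

Lemma cut_weight_norm_single w k : cut_weight (norm_fam Sp A) w [k] = C0.
Proof.
  rewrite cut_weight_single. apply (nth_map_prop (fun a => CLog (tau Sp a) = C0)).
  - rewrite ax_tau_one; apply CLog_C1.
  - intro i; rewrite tau_norm_fam; apply CLog_C1.
Qed.

Lemma cut_weight_split w ks : ks <> [] ->
  cut_weight A w ks = Cadd (cut_weight (tau_fam Sp A) w ks) (cut_weight (norm_fam Sp A) w ks).
Proof.
  intro Hne. destruct ks as [|k [|k' t]]; [congruence| |].
  - rewrite cut_weight_norm_single, !cut_weight_single.
    rewrite (nth_map_rel (fun a b => CLog (tau Sp a) = CLog (tau Sp b)) A (tau_fam Sp A) w k);
      auto; [ring|].
    intro i. unfold tau_fam. rewrite ax_tau_scal, ax_tau_one. f_equal. ring.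
  - rewrite cut_weight_tau_long by (simpl; lia). unfold cut_weight.
    rewrite !Lkappa_long by (simpl; lia). rewrite !map_map.
    rewrite (map_ext (fun x => normalize (nth x (map A w) (a_one Sp)))
                     (fun x => normalize (nth x (map (norm_fam Sp A) w) (a_one Sp)))); [ring|].
    intro x. apply (nth_map_rel (fun a b => normalize a = normalize b)); auto.
    intro i. unfold normalize at 2. rewrite tau_norm_fam, Cinv_C1, ax_scal_1. reflexivity.
Qed.
End LogCumulants.
Arguments cut_weight {Sp I}.

(** * Cutting a word into a basis element *)

(* A choice of letters k_1 < ... < k_m of a word is a sublist of its positions. *)
Fixpoint increasing (l : list nat) : Prop :=
  match l with [] => True | a :: t => (forall y, In y t -> a < y) /\ increasing t end.

Lemma sublists_increasing (l : list nat) s : In s (sublists l) -> increasing l ->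
  increasing s /\ incl s l.
Proof.
  revert s; induction l as [|x t IH]; intros s Hs Hl; simpl in Hs.
  - destruct Hs as [<-|[]]. split; simpl; auto. intros y [].
  - destruct Hl as [Hx Ht]. apply in_app_or in Hs as [Hs|Hs].
    + apply in_map_iff in Hs as [s' [<- Hs']]. destruct (IH _ Hs' Ht) as [H1 H2].
      split; [split; auto|]. intros y [<-|Hy]; [left; auto|right; apply H2, Hy].
    + destruct (IH _ Hs Ht). split; auto. intros y Hy; right; auto.
Qed.

Lemma increasing_seq a n : increasing (seq a n).
Proof.
  revert a; induction n; intro a; simpl; auto. split; auto.
  intros y Hy; apply in_seq in Hy; lia.
Qed.

Lemma sublists_positions n s : In s (sublists (seq 0 n)) ->
  increasing s /\ (forall x, In x s -> x < n).
Proof.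
  intro H. destruct (sublists_increasing _ _ H (increasing_seq 0 n)) as [H0 H1].
  split; auto. intros x Hx; apply H1, in_seq in Hx; lia.
Qed.

Lemma firstn_add {T} m k (l : list T) : firstn (m + k) l = firstn m l ++ firstn k (skipn m l).
Proof.
  revert l; induction m; intros l; simpl; auto.
  destruct l; simpl; [destruct k; auto|f_equal; auto].
Qed.

Lemma map_flat_map {T U V} (f : U -> V) (g : T -> list U) l :
  map f (flat_map g l) = flat_map (fun x => map f (g x)) l.
Proof. induction l; simpl; auto. rewrite map_app, IHl; auto. Qed.

Lemma Permutation_concat {T} (l l' : list (list T)) :
  Permutation l l' -> Permutation (concat l) (concat l').
Proof.
  induction 1; simpl; auto.
  - apply Permutation_app_head; auto.
  - rewrite !app_assoc. apply Permutation_app_tail, Permutation_app_comm.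
  - eapply perm_trans; eauto.
Qed.

Lemma map_nth_seq {T} (l : list T) d : map (fun i => nth i l d) (seq 0 (length l)) = l.
Proof. induction l; simpl; auto. f_equal. rewrite <- seq_shift, map_map. auto. Qed.

Lemma last_In (a : nat) t : In (last (a :: t) 0) (a :: t).
Proof. revert a; induction t as [|b t IH]; intros a; [left; auto|right; apply IH]. Qed.

Lemma hd_le_last a t : increasing (a :: t) -> a <= last (a :: t) 0.
Proof.
  intro Hi. destruct (last_In a t) as [H|H]; [lia|].
  destruct Hi as [Hi _]. specialize (Hi _ H). lia.
Qed.

Section Cutting.
Variable I : Type.

(* The pieces X_{i(k_1)}...X_{i(k_2-1)}, ..., X_{i(k_{m-1})}...X_{i(k_m-1)}. *)
Definition chunks (w : list I) (ks : list nat) : list (list I) :=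
  map (fun ab => firstn (snd ab - fst ab) (skipn (fst ab) w)) (combine ks (tl ks)).

Definition cut_key (w : list I) (ks : list nat) : key I :=
  (firstn (hd 0 ks) w ++ skipn (last ks 0) w, chunks w ks).

Definition letters (k : key I) : list I := fst k ++ concat (snd k).

Lemma chunks_concat w a t : increasing (a :: t) -> (forall x, In x (a :: t) -> x < length w) ->
  concat (chunks w (a :: t)) = firstn (last (a :: t) 0 - a) (skipn a w).
Proof.
  revert a; induction t as [|b t IH]; intros a Hi Hb.
  - simpl. rewrite Nat.sub_diag; reflexivity.
  - change (firstn (b - a) (skipn a w) ++ concat (chunks w (b :: t)) =
            firstn (last (a :: b :: t) 0 - a) (skipn a w)).
    destruct Hi as [Hab Hi].
    assert (a < b) by (apply Hab; left; auto).
    pose proof (hd_le_last Hi).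
    rewrite IH by auto with datatypes.
    change (last (a :: b :: t) 0) with (last (b :: t) 0).
    replace (last (b :: t) 0 - a) with ((b - a) + (last (b :: t) 0 - b)) by lia.
    rewrite firstn_add, skipn_skipn. do 3 f_equal. lia.
Qed.

Lemma cut_key_letters w ks : In ks (sublists (seq 0 (length w))) -> ks <> [] ->
  Permutation (letters (cut_key w ks)) w.
Proof.
  intros Hks Hne. destruct (sublists_positions _ _ Hks) as [Hi Hb].
  destruct ks as [|a t]; [congruence|]. unfold letters, cut_key; cbn [fst snd hd].
  rewrite chunks_concat by auto. pose proof (hd_le_last Hi) as Hle.
  set (L := last (a :: t) 0) in *.
  rewrite <- app_assoc. rewrite <- (firstn_skipn a w) at 4. apply Permutation_app_head.
  rewrite <- (firstn_skipn (L - a) (skipn a w)) at 2. rewrite skipn_skipn.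
  replace (L - a + a) with L by lia. apply Permutation_app_comm.
Qed.

Lemma chunks_length w ks : length (chunks w ks) = length ks - 1.
Proof.
  unfold chunks. rewrite length_map, length_combine.
  destruct ks; [reflexivity|]. cbn [tl length]. rewrite Nat.min_r; lia.
Qed.

Lemma chunks_nonempty w ks : increasing ks -> (forall x, In x ks -> x < length w) ->
  forall M, In M (chunks w ks) -> M <> [].
Proof.
  intros Hi Hb M HM. unfold chunks in HM. apply in_map_iff in HM as [[a b] [<- Hab]].
  cbn [fst snd]. destruct ks as [|k t]; [destruct Hab|]. cbn [tl] in Hab.
  assert (a < b /\ a < length w) as [H1 H2].
  { clear -Hi Hb Hab. revert k Hi Hb Hab; induction t as [|c t IH]; intros k Hi Hb Hab;
      [destruct Hab|].
    cbn [combine] in Hab. destruct Hab as [E|Hab].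
    - inversion E; subst. split; [apply (proj1 Hi); left; auto|apply Hb; left; auto].
    - apply (IH c); auto; [apply Hi|intros; apply Hb; right; auto]. }
  intro E. apply (f_equal (@length I)) in E.
  rewrite length_firstn, length_skipn in E. simpl in E. lia.
Qed.

Lemma cut_key_single w k : cut_key w [k] = (w, []).
Proof. unfold cut_key, chunks; simpl. rewrite firstn_skipn. reflexivity. Qed.

Lemma cut_key_outer_nonempty w ks : In ks (sublists (seq 0 (length w))) -> ks <> [] ->
  fst (cut_key w ks) <> [].
Proof.
  intros Hks Hne. destruct (sublists_positions _ _ Hks) as [Hi Hb].
  destruct ks as [|a t]; [congruence|]. unfold cut_key; cbn [fst].
  assert (last (a :: t) 0 < length w) by (apply Hb, last_In).
  intro E. apply (f_equal (@length I)) in E.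
  rewrite length_app, length_skipn in E. cbn [length] in E. lia.
Qed.

Lemma cut_key_valid w ks : In ks (sublists (seq 0 (length w))) ->
  forall M, In M (snd (cut_key w ks)) -> M <> [].
Proof. intros Hks. destruct (sublists_positions _ _ Hks). apply chunks_nonempty; auto. Qed.
End Cutting.

(** * The operators D_C as sums over cuts *)

Definition remove_at {T} (j : nat) (l : list T) : list T := firstn j l ++ skipn (S j) l.

Lemma remove_at_length {T} j (l : list T) : j < length l -> length (remove_at j l) = length l - 1.
Proof. intro. unfold remove_at. rewrite length_app, length_firstn, length_skipn. lia. Qed.

Lemma remove_at_perm {T} (d : T) j l : j < length l -> Permutation l (nth j l d :: remove_at j l).
Proof.
  intro Hj. unfold remove_at. rewrite <- (firstn_skipn j l) at 1.
  assert (E : skipn j l = nth j l d :: skipn (S j) l).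
  { revert j Hj; induction l; intros j Hj; simpl in *; [lia|].
    destruct j; auto. apply IHl; lia. }
  rewrite E. apply Permutation_sym, Permutation_middle.
Qed.

Section Cuts.
Variables (Sp : StarProbSpace) (I : Type).

(* A cut: the word, the chosen positions and the resulting basis element. *)
Definition cut : Type := (list I * list nat * key I)%type.

Definition cut_coeff (Cf : I -> Sp) (s : cut) : C := cut_weight Cf (fst (fst s)) (snd (fst s)).

Definition word_cuts (w : list I) : list cut :=
  flat_map (fun ks => match ks with [] => [] | _ :: _ => [(w, ks, cut_key w ks)] end)
           (sublists (seq 0 (length w))).

(* tr(M_0 tr(M_1)...tr(M_n)) as a list of trace factors (tr(1) = 1). *)
Definition trace_factors (k : key I) : list (list I) :=
  match fst k with [] => snd k | Mh :: Mt => (Mh :: Mt) :: snd k end.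

(* The cuts produced by D_C on M_0 tr(M_1)...tr(M_n): cuts of M_0, and cuts of
   one M_j whose result is put back under the trace. *)
Definition key_cuts (k : key I) : list cut :=
  map (fun s => (fst s, (fst (snd s), snd (snd s) ++ snd k))) (word_cuts (fst k)) ++
  flat_map (fun j => map (fun s => (fst s, (fst k ++ [],
                                              remove_at j (snd k) ++ trace_factors (snd s))))
                         (word_cuts (nth j (snd k) []))) (seq 0 (length (snd k))).

Lemma D_mono_cuts Cf w : @D_mono Sp I Cf w = map (fun s => (cut_coeff Cf s, snd s)) (word_cuts w).
Proof.
  unfold D_mono, word_cuts. rewrite map_flat_map. apply flat_map_ext. intros [|k t]; reflexivity.
Qed.

Lemma D_key_cuts Cf k : @D_key Sp I Cf k = map (fun s => (cut_coeff Cf s, snd s)) (key_cuts k).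
Proof.
  unfold D_key, key_cuts, tr_tpoly. rewrite !D_mono_cuts, map_app, !map_map. f_equal.
  rewrite map_flat_map. apply flat_map_ext. intro j. rewrite !D_mono_cuts, !map_map. reflexivity.
Qed.

Lemma word_cuts_In (w : list I) s : In s (word_cuts w) ->
  exists ks, s = (w, ks, cut_key w ks) /\ In ks (sublists (seq 0 (length w))) /\ ks <> [].
Proof.
  unfold word_cuts; intro H. apply in_flat_map in H as [ks [Hks H]].
  destruct ks as [|a t]; [destruct H|]. destruct H as [<-|[]].
  exists (a :: t); repeat split; auto; discriminate.
Qed.

Lemma key_cuts_In (k : key I) s : In s (key_cuts k) ->
  (exists s0, In s0 (word_cuts (fst k)) /\ s = (fst s0, (fst (snd s0), snd (snd s0) ++ snd k))) \/
  (exists j s0, j < length (snd k) /\ In s0 (word_cuts (nth j (snd k) [])) /\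
      s = (fst s0, (fst k ++ [], remove_at j (snd k) ++ trace_factors (snd s0)))).
Proof.
  unfold key_cuts; intro H. apply in_app_or in H as [H|H].
  - left. apply in_map_iff in H as [s0 [<- H]]. eauto.
  - right. apply in_flat_map in H as [j [Hj H]]. apply in_map_iff in H as [s0 [<- H]].
    apply in_seq in Hj. exists j, s0. repeat split; auto; lia.
Qed.

Lemma trace_factors_letters (k : key I) : concat (trace_factors k) = letters k.
Proof. unfold trace_factors, letters. destruct (fst k); reflexivity. Qed.

Lemma key_cuts_letters (k : key I) s : In s (key_cuts k) ->
  Permutation (letters (snd s)) (letters k).
Proof.
  intro H. destruct k as [M0 Ts].
  apply key_cuts_In in H as [[s0 [H1 ->]]|[j [s0 [Hj [H1 ->]]]]]; cbn [fst snd] in *;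
    apply word_cuts_In in H1 as [ks [-> [Hks Hne]]]; cbn [fst snd];
    pose proof (cut_key_letters _ Hks Hne) as P.
  - unfold letters in *; cbn [fst snd] in *.
    rewrite concat_app, app_assoc. apply Permutation_app_tail; auto.
  - rewrite <- trace_factors_letters in P.
    unfold letters; cbn [fst snd]. rewrite app_nil_r. apply Permutation_app_head.
    rewrite concat_app. eapply perm_trans; [apply Permutation_app_comm|].
    eapply perm_trans; [apply Permutation_app_tail, P|].
    change (nth j Ts [] ++ concat (remove_at j Ts)) with (concat (nth j Ts [] :: remove_at j Ts)).
    apply Permutation_concat, Permutation_sym, remove_at_perm; auto.
Qed.

Lemma key_cuts_positions_nonempty (k : key I) s : In s (key_cuts k) -> snd (fst s) <> [].
Proof.
  intro H. apply key_cuts_In in H as [[s0 [H1 ->]]|[j [s0 [Hj [H1 ->]]]]];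
    apply word_cuts_In in H1 as [ks [-> [Hks Hne]]]; auto.
Qed.

Lemma key_cuts_more_traces (k : key I) s : In s (key_cuts k) -> 2 <= length (snd (fst s)) ->
  S (length (snd k)) <= length (snd (snd s)).
Proof.
  intros H Hl. destruct k as [M0 Ts].
  apply key_cuts_In in H as [[s0 [H1 ->]]|[j [s0 [Hj [H1 ->]]]]]; cbn [fst snd] in *;
    apply word_cuts_In in H1 as [ks [-> [Hks Hne]]]; cbn [fst snd] in *.
  - unfold cut_key; cbn [snd]. rewrite length_app, chunks_length. lia.
  - rewrite length_app, remove_at_length by auto. unfold trace_factors.
    pose proof (cut_key_outer_nonempty _ Hks Hne) as F.
    destruct (fst (cut_key (nth j Ts []) ks)); [congruence|].
    cbn [length]. unfold cut_key; cbn [snd]. rewrite chunks_length. lia.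
Qed.

Definition key_valid (k : key I) : Prop := forall M, In M (snd k) -> M <> [].

Lemma key_cuts_valid (k : key I) s : key_valid k -> In s (key_cuts k) -> key_valid (snd s).
Proof.
  intros V H. destruct k as [M0 Ts].
  apply key_cuts_In in H as [[s0 [H1 ->]]|[j [s0 [Hj [H1 ->]]]]]; cbn [fst snd] in *;
    apply word_cuts_In in H1 as [ks [-> [Hks Hne]]]; cbn [fst snd] in *;
    intros M HM; cbn [snd] in HM; apply in_app_or in HM as [HM|HM].
  - eapply cut_key_valid; eauto.
  - apply V; auto.
  - apply V. unfold remove_at in HM.
    apply in_app_or in HM as [HM|HM];
      [rewrite <- (firstn_skipn j Ts)|rewrite <- (firstn_skipn (S j) Ts)]; apply in_or_app; auto.
  - unfold trace_factors in HM. pose proof (cut_key_outer_nonempty _ Hks Hne) as F.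
    destruct (fst (cut_key (nth j Ts []) ks)); [congruence|].
    destruct HM as [<-|HM]; [discriminate|eapply cut_key_valid; eauto].
Qed.
End Cuts.
Arguments cut_coeff {Sp I}.

Section Coefficients.
Variables (Sp : StarProbSpace) (I : Type).

Lemma key_equiv_refl (k : key I) : key_equiv k k.
Proof. split; auto. Qed.

Lemma key_equiv_sym (k1 k2 : key I) : key_equiv k1 k2 -> key_equiv k2 k1.
Proof. intros [H1 H2]; split; auto. apply Permutation_sym; auto. Qed.

Lemma key_equiv_trans (k1 k2 k3 : key I) : key_equiv k1 k2 -> key_equiv k2 k3 -> key_equiv k1 k3.
Proof. intros [H1 H2] [H3 H4]; split; [congruence|eapply perm_trans; eauto]. Qed.

Lemma key_equiv_letters (k1 k2 : key I) : key_equiv k1 k2 -> Permutation (letters k1) (letters k2).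
Proof.
  intros [H1 H2]. unfold letters. rewrite H1. apply Permutation_app_head, Permutation_concat; auto.
Qed.

Lemma key_equiv_traces (k1 k2 : key I) : key_equiv k1 k2 -> length (snd k1) = length (snd k2).
Proof. intros [_ H]; apply Permutation_length; auto. Qed.

Definition key_invariant (G : key I -> C) : Prop := forall k1 k2, key_equiv k1 k2 -> G k1 = G k2.

Definition letter_invariant (G : key I -> C) : Prop :=
  forall k1 k2, Permutation (letters k1) (letters k2) -> G k1 = G k2.

Definition indicator (k0 k : key I) : C :=
  if excluded_middle_informative (key_equiv k0 k) then C1 else C0.

Lemma indicator_invariant k0 : key_invariant (indicator k0).
Proof.
  intros k1 k2 E. unfold indicator.
  destruct (excluded_middle_informative (key_equiv k0 k1)) as [E1|E1],
           (excluded_middle_informative (key_equiv k0 k2)) as [E2|E2]; auto.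
  - elim E2; eapply key_equiv_trans; eauto.
  - elim E1; eapply key_equiv_trans; eauto using key_equiv_sym.
Qed.

Definition pairing (G : key I -> C) (u : tpoly I) : C :=
  Csum (map (fun ck => Cmul (fst ck) (G (snd ck))) u).

Lemma coeff_pairing (u : tpoly I) k : coeff u k = pairing (indicator k) u.
Proof.
  unfold coeff, pairing, indicator. apply Csum_map_ext.
  intros ck _. destruct excluded_middle_informative; ring.
Qed.

Lemma pairing_app G u1 u2 : pairing G (u1 ++ u2) = Cadd (pairing G u1) (pairing G u2).
Proof. unfold pairing. rewrite map_app, Csum_app; auto. Qed.

Lemma pairing_ext (G G' : key I -> C) u : (forall k, G k = G' k) -> pairing G u = pairing G' u.
Proof. intro H; unfold pairing; apply Csum_map_ext; intros; rewrite H; auto. Qed.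

Lemma pairing_scale c (G : key I -> C) u : pairing (fun k => Cmul c (G k)) u = Cmul c (pairing G u).
Proof. unfold pairing. rewrite <- Csum_map_mul. apply Csum_map_ext; intros; ring. Qed.

Lemma pairing_add (G G' : key I -> C) u :
  pairing (fun k => Cadd (G k) (G' k)) u = Cadd (pairing G u) (pairing G' u).
Proof. unfold pairing. rewrite <- Csum_map_add. apply Csum_map_ext; intros; ring. Qed.

Lemma coeff_app (u1 u2 : tpoly I) k : coeff (u1 ++ u2) k = Cadd (coeff u1 k) (coeff u2 k).
Proof. rewrite !coeff_pairing. apply pairing_app. Qed.

Lemma coeff_concat (L : list (tpoly I)) k : coeff (concat L) k = Csum (map (fun u => coeff u k) L).
Proof. induction L; simpl; [reflexivity|]. rewrite coeff_app, IHL. reflexivity. Qed.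

Lemma coeff_scale c (u : tpoly I) k :
  coeff (map (fun ck => (Cmul c (fst ck), snd ck)) u) k = Cmul c (coeff u k).
Proof.
  rewrite !coeff_pairing. unfold pairing.
  rewrite map_map, <- Csum_map_mul. apply Csum_map_ext. intros; simpl; ring.
Qed.

Lemma coeff_absent (u : tpoly I) k :
  (forall ck, In ck u -> ~ key_equiv k (snd ck)) -> coeff u k = C0.
Proof.
  intro H. rewrite coeff_pairing. apply Csum_map_zero. intros ck Hck. unfold indicator.
  destruct excluded_middle_informative as [E|E]; [elim (H ck Hck E)|ring].
Qed.

(* The transpose of D_C: G is pulled back to the sum over the cuts of k. *)
Definition cut_sum (Cf : I -> Sp) (G : key I -> C) (k : key I) : C :=
  Csum (map (fun s => Cmul (cut_coeff Cf s) (G (snd s))) (key_cuts k)).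

Lemma pairing_Dop Cf G u : pairing G (@Dop Sp I Cf u) = pairing (cut_sum Cf G) u.
Proof.
  unfold Dop, pairing. rewrite Csum_flat_map. apply Csum_map_ext. intros ck _.
  rewrite D_key_cuts, !map_map. unfold cut_sum. rewrite <- Csum_map_mul.
  apply Csum_map_ext. intros; simpl; ring.
Qed.

Lemma coeff_Dop Cf u k : coeff (@Dop Sp I Cf u) k = pairing (cut_sum Cf (indicator k)) u.
Proof. rewrite coeff_pairing. apply pairing_Dop. Qed.

Lemma Dop_app (Cf : I -> Sp) u1 u2 : Dop Sp Cf (u1 ++ u2) = Dop Sp Cf u1 ++ Dop Sp Cf u2.
Proof. unfold Dop. apply flat_map_app. Qed.

Lemma Dop_In (Cf : I -> Sp) u ck : In ck (Dop Sp Cf u) ->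
  exists ck0 s, In ck0 u /\ In s (key_cuts (snd ck0)) /\ snd ck = snd s.
Proof.
  unfold Dop; intro H. apply in_flat_map in H as [ck0 [H0 H]].
  apply in_map_iff in H as [dk [<- H]].
  rewrite D_key_cuts in H. apply in_map_iff in H as [s [<- Hs]]. exists ck0, s; auto.
Qed.
End Coefficients.
Arguments cut_sum {Sp I}.

(** * D_C is well defined on the quotient by reordering of traces *)

Section PairingInvariance.
Variable I : Type.

Definition drop_key (k0 : key I) (u : tpoly I) : tpoly I :=
  filter (fun ck => if excluded_middle_informative (key_equiv k0 (snd ck)) then false else true) u.

Lemma pairing_drop_key G (HG : key_invariant G) k0 u :
  pairing G u = Cadd (Cmul (coeff u k0) (G k0)) (pairing G (drop_key k0 u)).
Proof.
  rewrite coeff_pairing. unfold pairing. induction u as [|ck u IH]; simpl; [ring|].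
  unfold indicator at 1.
  destruct (excluded_middle_informative (key_equiv k0 (snd ck))) as [E|E]; simpl; rewrite IH.
  - rewrite (HG _ _ (key_equiv_sym E)). ring.
  - ring.
Qed.

Lemma coeff_drop_key k0 u k : coeff (drop_key k0 u) k =
  if excluded_middle_informative (key_equiv k k0) then C0 else coeff u k.
Proof.
  rewrite !coeff_pairing. unfold pairing, drop_key.
  induction u as [|ck u IH]; simpl; [destruct excluded_middle_informative; auto|].
  destruct (excluded_middle_informative (key_equiv k0 (snd ck))) as [E|E]; simpl;
    rewrite IH; destruct (excluded_middle_informative (key_equiv k k0)) as [E2|E2]; auto.
  - unfold indicator at 2. destruct (excluded_middle_informative (key_equiv k (snd ck))) as [E3|E3].
    + elim E2; eapply key_equiv_trans; eauto using key_equiv_sym.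
    + ring.
  - unfold indicator at 1. destruct (excluded_middle_informative (key_equiv k (snd ck))) as [E3|E3].
    + elim E; eapply key_equiv_trans; eauto using key_equiv_sym.
    + ring.
Qed.

Lemma drop_key_shorter ck u : length (drop_key (snd ck) (ck :: u)) < length (ck :: u).
Proof.
  unfold drop_key; simpl. destruct excluded_middle_informative as [_|E].
  - simpl. apply -> Nat.succ_le_mono. apply filter_length_le.
  - elim E; apply key_equiv_refl.
Qed.

(* Pairing with an invariant function only depends on the coefficients:
   peel off one basis element at a time. *)
Lemma pairing_tp_eq (G : key I -> C) (HG : key_invariant G) (u u' : tpoly I) :
  tp_eq u u' -> pairing G u = pairing G u'.
Proof.
  remember (length u + length u') as n. assert (Hn : length u + length u' <= n) by lia. clear Heqn.
  revert u u' Hn. induction n as [n IH] using lt_wf_ind. intros u u' Hn E.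
  assert (Hstep : forall k0,
            length (drop_key k0 u) + length (drop_key k0 u') < length u + length u' ->
            pairing G u = pairing G u').
  { intros k0 Hlt. rewrite (pairing_drop_key HG k0 u), (pairing_drop_key HG k0 u'), (E k0). f_equal.
    apply (IH (length (drop_key k0 u) + length (drop_key k0 u'))); [lia|lia|].
    intro k. rewrite !coeff_drop_key. destruct excluded_middle_informative; auto. }
  destruct u as [|ck u].
  - destruct u' as [|ck' u']; [reflexivity|].
    apply (Hstep (snd ck')). pose proof (drop_key_shorter ck' u').
    cbn [length drop_key filter] in *. lia.
  - apply (Hstep (snd ck)). pose proof (drop_key_shorter ck u).
    assert (length (drop_key (snd ck) u') <= length u') by apply filter_length_le. lia.
Qed.
End PairingInvariance.

Section SumOverPicks.
Variables (T : Type) (d : T).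

Definition sum_over_picks (Phi : T -> list T -> C) (l : list T) : C :=
  Csum (map (fun j => Phi (nth j l d) (remove_at j l)) (seq 0 (length l))).

Lemma sum_over_picks_cons Phi x l :
  sum_over_picks Phi (x :: l) = Cadd (Phi x l) (sum_over_picks (fun M R => Phi M (x :: R)) l).
Proof.
  unfold sum_over_picks. cbn [length seq map]. rewrite Csum_cons. f_equal.
  rewrite <- seq_shift, map_map. reflexivity.
Qed.

Lemma sum_over_picks_ext Phi Phi' l : (forall M R, Phi M R = Phi' M R) ->
  sum_over_picks Phi l = sum_over_picks Phi' l.
Proof. intro H; unfold sum_over_picks; apply Csum_map_ext; auto. Qed.

Lemma sum_over_picks_perm l l' : Permutation l l' ->
  forall Phi, (forall M R R', Permutation R R' -> Phi M R = Phi M R') ->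
  sum_over_picks Phi l = sum_over_picks Phi l'.
Proof.
  induction 1; intros Phi HP.
  - reflexivity.
  - rewrite !sum_over_picks_cons, (HP x l l' H). f_equal.
    apply IHPermutation. intros; apply HP; auto.
  - rewrite !sum_over_picks_cons.
    rewrite (sum_over_picks_ext (fun M R => Phi M (y :: x :: R)) (fun M R => Phi M (x :: y :: R)))
      by (intros; apply HP, perm_swap).
    ring.
  - rewrite IHPermutation1, IHPermutation2; auto.
Qed.
End SumOverPicks.

Section CutSumInvariance.
Variables (Sp : StarProbSpace) (I : Type).

Lemma cut_sum_split (Cf : I -> Sp) G M0 Ts :
  cut_sum Cf G (M0, Ts) =
  Cadd (Csum (map (fun s => Cmul (cut_coeff Cf s) (G (fst (snd s), snd (snd s) ++ Ts)))
                  (word_cuts M0)))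
       (sum_over_picks [] (fun M R => Csum (map (fun s =>
          Cmul (cut_coeff Cf s) (G (M0 ++ [], R ++ trace_factors (snd s)))) (word_cuts M))) Ts).
Proof.
  unfold cut_sum, key_cuts. cbn [fst snd]. rewrite map_app, Csum_app, map_map. f_equal.
  rewrite Csum_flat_map. unfold sum_over_picks. apply Csum_map_ext. intros j _.
  rewrite map_map. reflexivity.
Qed.

Lemma cut_sum_invariant (Cf : I -> Sp) G : key_invariant G -> key_invariant (cut_sum Cf G).
Proof.
  intros HG [M0 Ts] [M0' Ts'] [E1 E2]. cbn [fst snd] in *. subst M0'.
  rewrite !cut_sum_split. f_equal.
  - apply Csum_map_ext. intros s _. f_equal.
    apply HG. split; auto. apply Permutation_app_head; auto.
  - apply sum_over_picks_perm; auto. intros M R R' HR. apply Csum_map_ext. intros s _. f_equal.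
    apply HG. split; auto. apply Permutation_app_tail; auto.
Qed.

Lemma Dop_tp_eq (Cf : I -> Sp) u u' : tp_eq u u' -> tp_eq (Dop Sp Cf u) (Dop Sp Cf u').
Proof.
  intros E k. rewrite !coeff_Dop. apply pairing_tp_eq; auto.
  apply cut_sum_invariant, indicator_invariant.
Qed.

Lemma iter_Dop_tp_eq (Cf : I -> Sp) j u u' : tp_eq u u' ->
  tp_eq (Nat.iter j (Dop Sp Cf) u) (Nat.iter j (Dop Sp Cf) u').
Proof. intro E. induction j; simpl; auto. apply Dop_tp_eq; auto. Qed.

Lemma iter_Dop_app (Cf : I -> Sp) j u1 u2 :
  Nat.iter j (Dop Sp Cf) (u1 ++ u2) = Nat.iter j (Dop Sp Cf) u1 ++ Nat.iter j (Dop Sp Cf) u2.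
Proof. induction j; simpl; auto. rewrite IHj. apply Dop_app. Qed.
End CutSumInvariance.
Arguments Dop_tp_eq {Sp I Cf u u'}.
Arguments iter_Dop_tp_eq {Sp I Cf} j {u u'}.

(** * Fact (1): D_{tau(A)} is diagonal *)

Lemma sum_sublists_nil (l : list nat) (h : list nat -> C) :
  (forall s, s <> [] -> h s = C0) -> Csum (map h (sublists l)) = h [].
Proof.
  intro H. induction l as [|x t IH]; simpl; [ring|].
  rewrite map_app, Csum_app, IH, map_map, Csum_map_zero; [ring|]. intros; apply H; discriminate.
Qed.

Lemma sum_sublists_singletons (l : list nat) (h : list nat -> C) : h [] = C0 ->
  (forall s, 2 <= length s -> h s = C0) ->
  Csum (map h (sublists l)) = Csum (map (fun x => h [x]) l).
Proof.
  intros H0 H2. induction l as [|x t IH]; simpl; [rewrite H0; ring|].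
  rewrite map_app, Csum_app, IH, map_map. f_equal.
  apply (sum_sublists_nil t (fun s => h (x :: s))).
  intros s Hs. apply H2. destruct s; simpl; [congruence|lia].
Qed.

Lemma sum_word_cuts {I} (w : list I) (F : cut I -> C) :
  Csum (map F (word_cuts w)) =
  Csum (map (fun ks => match ks with [] => C0 | _ :: _ => F (w, ks, cut_key w ks) end)
            (sublists (seq 0 (length w)))).
Proof.
  unfold word_cuts. rewrite Csum_flat_map. apply Csum_map_ext. intros [|k t] _; simpl; ring.
Qed.

Section Diagonal.
Variables (Sp : StarProbSpace) (I : Type) (Cf : I -> Sp).

Definition letter_log (k : key I) : C := Csum (map (fun x => CLog (tau Sp (Cf x))) (letters k)).

Lemma letter_log_invariant : letter_invariant letter_log.
Proof. intros k1 k2 P. unfold letter_log. apply Csum_perm, Permutation_map; auto. Qed.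

Hypothesis higher_vanish : forall w ks, 2 <= length ks -> cut_weight Cf w ks = C0.

(* Only single-letter cuts survive, and these leave the word unchanged. *)
Lemma word_cuts_diagonal (w : list I) (F : key I -> C) c :
  (forall x, In x (seq 0 (length w)) -> F (cut_key w [x]) = c) ->
  Csum (map (fun s => Cmul (cut_coeff Cf s) (F (snd s))) (word_cuts w)) =
  Cmul (Csum (map (fun x => CLog (tau Sp (Cf x))) w)) c.
Proof.
  intro HF. rewrite sum_word_cuts, sum_sublists_singletons; [| reflexivity |].
  2:{ intros [|a s] Hs; [reflexivity|]. unfold cut_coeff; cbn [fst snd].
      rewrite higher_vanish; auto. ring. }
  rewrite (Csum_map_ext _ (fun x => Cmul c (CLog (tau Sp (nth x (map Cf w) (a_one Sp)))))).
  2:{ intros x Hx. cbn [snd]. rewrite HF by auto. unfold cut_coeff; cbn [fst snd].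
      rewrite cut_weight_single. ring. }
  rewrite Csum_map_mul.
  rewrite <- (map_map (fun x => nth x (map Cf w) (a_one Sp)) (fun a => CLog (tau Sp a))).
  replace (length w) with (length (map Cf w)) by apply length_map.
  rewrite map_nth_seq, map_map. ring.
Qed.

Lemma cut_sum_diagonal G : key_invariant G -> forall k, cut_sum Cf G k = Cmul (letter_log k) (G k).
Proof.
  intros HG [M0 Ts]. rewrite cut_sum_split. set (g := fun x => CLog (tau Sp (Cf x))).
  assert (Eouter : Csum (map (fun s => Cmul (cut_coeff Cf s) (G (fst (snd s), snd (snd s) ++ Ts)))
                             (word_cuts M0)) = Cmul (Csum (map g M0)) (G (M0, Ts))).
  { apply (word_cuts_diagonal M0 (fun k' => G (fst k', snd k' ++ Ts))).
    intros x _; rewrite cut_key_single; reflexivity. }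
  assert (Etraces : sum_over_picks [] (fun M R => Csum (map (fun s =>
            Cmul (cut_coeff Cf s) (G (M0 ++ [], R ++ trace_factors (snd s)))) (word_cuts M))) Ts
          = Cmul (Csum (map g (concat Ts))) (G (M0, Ts))).
  { unfold sum_over_picks.
    rewrite (Csum_map_ext _ (fun j => Cmul (G (M0, Ts)) (Csum (map g (nth j Ts []))))).
    - rewrite Csum_map_mul, <- (map_map (fun j => nth j Ts []) (fun M => Csum (map g M))),
        map_nth_seq, Csum_concat. ring.
    - intros j Hj. apply in_seq in Hj. cbv beta.
      rewrite (@word_cuts_diagonal (nth j Ts [])
                 (fun k' => G (M0 ++ [], remove_at j Ts ++ trace_factors k')) (G (M0, Ts))).
      { unfold g; ring. }
      (* the single cut returns M_j to its trace, up to reordering the traces *)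
      intros x Hx. rewrite cut_key_single. apply HG. apply in_seq in Hx.
      unfold trace_factors; cbn [fst snd].
      destruct (nth j Ts []) as [|a M] eqn:E; [simpl in Hx; lia|].
      split; cbn [fst snd]; [apply app_nil_r|].
      eapply perm_trans; [apply Permutation_sym, Permutation_cons_append|].
      rewrite <- E. apply Permutation_sym, remove_at_perm. lia. }
  rewrite Eouter, Etraces. unfold letter_log, letters; cbn [fst snd].
  rewrite map_app, Csum_app. unfold g; ring.
Qed.
End Diagonal.
Arguments letter_log {Sp I}.
Arguments letter_log_invariant {Sp I Cf}.

(** * Fact (2): D_{tau(A)} commutes with every D_C, and D_A splits *)

Section Commutation.
Variables (Sp : StarProbSpace) (I : Type).

(* A cut from key to something equivalent to k forces lambda(key) = lambda(k). *)
Lemma cut_sum_indicator_letter_invariant (Cf : I -> Sp) psi k key : letter_invariant psi ->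
  Cmul (cut_sum Cf (indicator k) key) (psi k) = Cmul (cut_sum Cf (indicator k) key) (psi key).
Proof.
  intro Hp. unfold cut_sum.
  rewrite !(Cmul_comm _ (psi _)), <- !Csum_map_mul. apply Csum_map_ext.
  intros s Hs. unfold indicator. destruct excluded_middle_informative as [E|E]; [|ring].
  rewrite (Hp k key); auto.
  eapply perm_trans; [apply key_equiv_letters, E|apply key_cuts_letters; auto].
Qed.

Variable A : I -> Sp.
Hypothesis hA : forall i, tau Sp (A i) <> C0.

Lemma cut_sum_Dtau G : key_invariant G ->
  forall k, cut_sum (tau_fam Sp A) G k = Cmul (letter_log (tau_fam Sp A) k) (G k).
Proof. apply cut_sum_diagonal, cut_weight_tau_long, hA. Qed.

Lemma coeff_Dtau u k :
  coeff (Dop Sp (tau_fam Sp A) u) k = Cmul (letter_log (tau_fam Sp A) k) (coeff u k).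
Proof.
  rewrite coeff_Dop, coeff_pairing, <- pairing_scale. apply pairing_ext. intro key.
  rewrite cut_sum_Dtau by apply indicator_invariant.
  unfold indicator. destruct excluded_middle_informative as [E|E]; [|ring].
  rewrite (letter_log_invariant k key); [ring|]. apply key_equiv_letters; auto.
Qed.

Lemma Dtau_commutes (Cf : I -> Sp) u k :
  coeff (Dop Sp (tau_fam Sp A) (Dop Sp Cf u)) k = coeff (Dop Sp Cf (Dop Sp (tau_fam Sp A) u)) k.
Proof.
  rewrite coeff_Dtau, !coeff_Dop, pairing_Dop, <- pairing_scale. apply pairing_ext. intro key.
  rewrite cut_sum_Dtau by (apply cut_sum_invariant, indicator_invariant).
  rewrite Cmul_comm, (cut_sum_indicator_letter_invariant Cf k key letter_log_invariant). ring.
Qed.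

Lemma coeff_DA_split u k : coeff (Dop Sp A u) k =
  Cadd (coeff (Dop Sp (tau_fam Sp A) u) k) (coeff (Dop Sp (norm_fam Sp A) u) k).
Proof.
  rewrite !coeff_Dop, <- pairing_add. apply pairing_ext. intro key. unfold cut_sum.
  rewrite <- Csum_map_add. apply Csum_map_ext. intros s Hs. unfold cut_coeff.
  rewrite (cut_weight_split Sp A hA) by (eapply key_cuts_positions_nonempty; eauto). ring.
Qed.
End Commutation.
Arguments cut_sum_indicator_letter_invariant {Sp I} Cf {psi}.

(** * Fact (3): D_{A/tau(A)} is nilpotent *)

Section Nilpotency.
Variables (Sp : StarProbSpace) (I : Type) (A : I -> Sp).
Hypothesis hA : forall i, tau Sp (A i) <> C0.

Let DnA := Dop Sp (norm_fam Sp A).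

(* After i applications of D_{A/tau(A)} only basis elements with at least i
   trace factors remain: single-letter cuts carry the weight Log 1 = 0, all
   other cuts create a new trace factor. *)
Lemma iter_Dnorm_few_traces u : forall i k, length (snd k) < i -> coeff (Nat.iter i DnA u) k = C0.
Proof.
  induction i as [|i IH]; intros k Hk; [lia|].
  simpl. set (X := Nat.iter i DnA u). unfold DnA at 1.
  set (X' := filter (fun ck => Nat.leb i (length (snd (snd ck)))) X).
  assert (E : tp_eq X X').
  { intro k0. unfold X'. destruct (Nat.lt_ge_cases (length (snd k0)) i) as [H|H].
    - unfold X. rewrite IH, coeff_pairing by auto. symmetry. apply Csum_map_zero.
      intros ck Hck. apply filter_In in Hck as [_ Hck]. apply Nat.leb_le in Hck. unfold indicator.
      destruct excluded_middle_informative as [E|E]; [|ring].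
      apply key_equiv_traces in E. unfold key in *. lia.
    - rewrite !coeff_pairing. symmetry. apply Csum_filter.
      intros ck _ Hp. apply Nat.leb_gt in Hp. unfold indicator.
      destruct excluded_middle_informative as [E|E]; [|ring].
      apply key_equiv_traces in E. unfold key in *. lia. }
  rewrite (Dop_tp_eq E k), coeff_Dop. apply Csum_map_zero. intros ck Hck.
  unfold X' in Hck. apply filter_In in Hck as [_ Hck]. apply Nat.leb_le in Hck.
  unfold cut_sum. rewrite Csum_map_zero; [ring|]. intros s Hs.
  pose proof (key_cuts_positions_nonempty _ _ Hs) as Hne.
  destruct (snd (fst s)) as [|x [|y t]] eqn:Eks; [congruence| |].
  - unfold cut_coeff. rewrite Eks, (cut_weight_norm_single Sp A hA). ring.
  - pose proof (key_cuts_more_traces _ _ Hs ltac:(rewrite Eks; simpl; lia)). unfold indicator.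
    destruct excluded_middle_informative as [E2|E2]; [|ring].
    apply key_equiv_traces in E2. unfold key in *. lia.
Qed.

Definition degree_bounded (d : nat) (u : tpoly I) : Prop :=
  forall ck, In ck u -> key_valid (snd ck) /\ length (letters (snd ck)) <= d.

Lemma iter_Dop_degree_bounded (Cf : I -> Sp) d u i :
  degree_bounded d u -> degree_bounded d (Nat.iter i (Dop Sp Cf) u).
Proof.
  intro H. induction i; simpl; auto. intros ck Hck.
  apply Dop_In in Hck as [ck0 [s [H0 [Hs E]]]].
  destruct (IHi _ H0) as [V L]. rewrite E. split; [eapply key_cuts_valid; eauto|].
  rewrite (Permutation_length (key_cuts_letters _ _ Hs)). auto.
Qed.

Lemma traces_le_letters (Ts : list (list I)) : (forall M, In M Ts -> M <> []) ->
  length Ts <= length (concat Ts).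
Proof.
  intro H. induction Ts as [|M Ts IH]; simpl; auto. rewrite length_app.
  destruct M; [elim (H [] (or_introl eq_refl)); auto|].
  simpl. specialize (IH ltac:(intros; apply H; right; auto)). lia.
Qed.

(* A valid basis element of degree d has at most d traces, so D_{A/tau(A)}^i
   vanishes on elements of degree at most d once i > d. *)
Lemma Dnorm_nilpotent d u : degree_bounded d u ->
  forall i k, d < i -> coeff (Nat.iter i DnA u) k = C0.
Proof.
  intros H i k Hi. destruct (Nat.lt_ge_cases (length (snd k)) i) as [Hk|Hk].
  - apply iter_Dnorm_few_traces; auto.
  - apply coeff_absent. intros ck Hck E.
    destruct (iter_Dop_degree_bounded (norm_fam Sp A) i H _ Hck) as [V L].
    pose proof (traces_le_letters _ V). apply key_equiv_traces in E.
    unfold letters in L. rewrite length_app in L. lia.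
Qed.
End Nilpotency.

(** * Complex series *)

Fixpoint sum_upto (f : nat -> C) (n : nat) : C :=
  match n with 0 => C0 | S n => Cadd (sum_upto f n) (f n) end.

Lemma Csum_seq f n : Csum (map f (seq 0 n)) = sum_upto f n.
Proof.
  induction n; [reflexivity|].
  rewrite seq_S, map_app, Csum_app, IHn. cbn [sum_upto map]. rewrite Csum_cons. simpl. ring.
Qed.

Lemma sum_upto_ext f g n : (forall i, i < n -> f i = g i) -> sum_upto f n = sum_upto g n.
Proof. induction n; intro H; simpl; auto. rewrite IHn, H; auto. Qed.

Lemma sum_upto_add f g n :
  sum_upto (fun i => Cadd (f i) (g i)) n = Cadd (sum_upto f n) (sum_upto g n).
Proof. induction n; simpl; [ring|]. rewrite IHn; ring. Qed.

Lemma sum_upto_mul c f n : sum_upto (fun i => Cmul c (f i)) n = Cmul c (sum_upto f n).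
Proof. induction n; simpl; [ring|]. rewrite IHn; ring. Qed.

Lemma sum_upto_shift f n : sum_upto f (S n) = Cadd (f 0) (sum_upto (fun i => f (S i)) n).
Proof. induction n; simpl in *; [ring|]. rewrite IHn; ring. Qed.

Lemma sum_upto_zero f n : (forall i, i < n -> f i = C0) -> sum_upto f n = C0.
Proof.
  intro H; rewrite (sum_upto_ext f (fun _ => C0)) by auto.
  induction n; simpl; auto. rewrite IHn; [ring|]; auto.
Qed.

Lemma sum_upto_split f d n : d <= n ->
  sum_upto f n = Cadd (sum_upto f d) (sum_upto (fun i => f (d + i)) (n - d)).
Proof.
  intro. replace n with (d + (n - d)) at 1 by lia. generalize (n - d) as m.
  induction m; simpl; [rewrite Nat.add_0_r; ring|].
  rewrite Nat.add_succ_r. simpl. rewrite IHm; ring.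
Qed.

Lemma sum_upto_truncate f d n : d <= n -> (forall i, d <= i -> f i = C0) ->
  sum_upto f n = sum_upto f d.
Proof.
  intros Hd Hf. rewrite (sum_upto_split f Hd), (@sum_upto_zero (fun i => f (d + i)) (n - d));
    [ring|].
  intros; apply Hf; lia.
Qed.

Fixpoint Cpow (z : C) (n : nat) : C := match n with 0 => C1 | S n => Cmul z (Cpow z n) end.

Lemma Un_cv_const (c : R) : Un_cv (fun _ => c) c.
Proof. intros eps He. exists 0%nat. intros. unfold Rdist. rewrite Rminus_diag, Rabs_R0. lra. Qed.

Lemma Ccv_eventually u u' z N0 : (forall N, (N0 <= N)%nat -> u' N = u N) -> Ccv u z -> Ccv u' z.
Proof.
  intros H [H1 H2].
  split; intros eps He; [destruct (H1 eps He) as [N HN]|destruct (H2 eps He) as [N HN]];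
    exists (max N N0); intros n Hn; rewrite H by lia; apply HN; lia.
Qed.

Lemma Ccv_const z : Ccv (fun _ => z) z.
Proof. split; apply Un_cv_const. Qed.

Lemma Ccv_add u v a b : Ccv u a -> Ccv v b -> Ccv (fun N => Cadd (u N) (v N)) (Cadd a b).
Proof. intros [H1 H2] [H3 H4]. split; simpl; apply CV_plus; auto. Qed.

Lemma Ccv_scale c u a : Ccv u a -> Ccv (fun N => Cmul c (u N)) (Cmul c a).
Proof.
  intros [H1 H2]. split; simpl.
  - apply CV_minus; apply CV_mult; auto; apply Un_cv_const.
  - apply CV_plus; apply CV_mult; auto; apply Un_cv_const.
Qed.

Lemma Ccv_delay u a i : Ccv u a -> Ccv (fun N => u (N - i)%nat) a.
Proof.
  intros [H1 H2].
  split; intros eps He; [destruct (H1 eps He) as [N HN]|destruct (H2 eps He) as [N HN]];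
    exists (N + i)%nat; intros n Hn; apply HN; lia.
Qed.

Lemma Ccv_sum_upto (F : nat -> nat -> C) (L : nat -> C) d :
  (forall i, Ccv (F i) (L i)) -> Ccv (fun N => sum_upto (fun i => F i N) d) (sum_upto L d).
Proof. intro H. induction d; simpl; [apply Ccv_const|apply Ccv_add; auto]. Qed.

Lemma Cmod_mul a b : Cmod (Cmul a b) = (Cmod a * Cmod b)%R.
Proof.
  unfold Cmod. rewrite <- sqrt_mult by nra. f_equal. destruct a, b; simpl. ring.
Qed.

Lemma Cmod_pow z i : Cmod (Cpow z i) = (Cmod z ^ i)%R.
Proof.
  induction i; simpl; [|rewrite Cmod_mul, IHi; auto].
  unfold Cmod; simpl. replace (1 * 1 + 0 * 0)%R with 1%R by ring. apply sqrt_1.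
Qed.

Lemma Cmod_RtoC a : Cmod (RtoC a) = Rabs a.
Proof.
  unfold Cmod, RtoC; simpl. replace (a * a + 0 * 0)%R with (Rsqr a) by (unfold Rsqr; ring).
  apply sqrt_Rsqr_abs.
Qed.

Lemma components_le_Cmod z : (Rabs (fst z) <= Cmod z)%R /\ (Rabs (snd z) <= Cmod z)%R.
Proof.
  unfold Cmod. rewrite <- !sqrt_Rsqr_abs.
  split; apply sqrt_le_1; try apply Rle_0_sqr; unfold Rsqr; nra.
Qed.

Lemma Cauchy_dominated (S P : nat -> R) :
  (forall m n, (m <= n)%nat -> (Rabs (S n - S m) <= P n - P m)%R) -> Cauchy_crit P -> Cauchy_crit S.
Proof.
  intros H HP eps He. destruct (HP eps He) as [N HN]. exists N. intros n m Hn Hm.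
  unfold Rdist in *. destruct (Nat.le_ge_cases m n) as [Hmn|Hmn].
  - specialize (H _ _ Hmn). specialize (HN n m Hn Hm). pose proof (Rle_abs (P n - P m)). lra.
  - specialize (H _ _ Hmn). specialize (HN m n Hm Hn). rewrite Rabs_minus_sym.
    pose proof (Rle_abs (P m - P n)). lra.
Qed.

Lemma abs_convergent_series (a : nat -> C) :
  Cauchy_crit (sum_f_R0 (fun i => Cmod (a i))) -> exists e, Ccv (fun N => sum_upto a (S N)) e.
Proof.
  set (P := sum_f_R0 (fun i => Cmod (a i))). intro HP.
  assert (Hb : forall m n, (m <= n)%nat ->
     (Rabs (fst (sum_upto a (S n)) - fst (sum_upto a (S m))) <= P n - P m)%R /\
     (Rabs (snd (sum_upto a (S n)) - snd (sum_upto a (S m))) <= P n - P m)%R).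
  { intros m n Hmn. induction Hmn as [|n Hmn [H1 H2]]; [rewrite !Rminus_diag, Rabs_R0; lra|].
    change (sum_upto a (S (S n))) with (Cadd (sum_upto a (S n)) (a (S n))).
    change (P (S n)) with (P n + Cmod (a (S n)))%R.
    destruct (components_le_Cmod (a (S n))) as [Hf Hs]. cbn [fst snd Cadd].
    split; [ replace (fst (sum_upto a (S n)) + fst (a (S n)) - fst (sum_upto a (S m)))%R with
               ((fst (sum_upto a (S n)) - fst (sum_upto a (S m))) + fst (a (S n)))%R by ring
           | replace (snd (sum_upto a (S n)) + snd (a (S n)) - snd (sum_upto a (S m)))%R with
               ((snd (sum_upto a (S n)) - snd (sum_upto a (S m))) + snd (a (S n)))%R by ring ];
      eapply Rle_trans; try apply Rabs_triang; lra. }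
  destruct (R_complete (fun N => fst (sum_upto a (S N)))) as [l1 H1].
  { apply (@Cauchy_dominated _ P); auto. intros; apply Hb; auto. }
  destruct (R_complete (fun N => snd (sum_upto a (S N)))) as [l2 H2].
  { apply (@Cauchy_dominated _ P); auto. intros; apply Hb; auto. }
  exists (l1, l2). split; auto.
Qed.

Definition exp_term (z : C) (i : nat) : C := Cmul (RtoC (/ INR (fact i))) (Cpow z i).

Lemma exp_series_converges z : exists e, Ccv (fun N => sum_upto (exp_term z) (S N)) e.
Proof.
  apply abs_convergent_series, CV_Cauchy. exists (exp (Cmod z)).
  unfold exp. destruct (exist_exp (Cmod z)) as [l Hl]. simpl.
  intros eps He. destruct (Hl eps He) as [N HN]. exists N. intros n Hn.
  unfold R_dist, Rdist in *. rewrite (sum_eq _ (fun i => / INR (fact i) * Cmod z ^ i)%R); auto.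
  intros i _. unfold exp_term. rewrite Cmod_mul, Cmod_RtoC, Cmod_pow. f_equal. apply Rabs_right.
  apply Rle_ge, Rlt_le, Rinv_0_lt_compat, lt_0_INR, lt_O_fact.
Qed.

Definition CExp (z : C) : C :=
  proj1_sig (constructive_indefinite_description _ (exp_series_converges z)).

Lemma CExp_spec z : Ccv (fun N => sum_upto (exp_term z) (S N)) (CExp z).
Proof. unfold CExp. destruct constructive_indefinite_description; auto. Qed.

(** * The binomial expansion of exp(lambda + N) for nilpotent N *)

Fixpoint binom (n k : nat) : nat :=
  match n, k with
  | _, 0 => 1
  | 0, S _ => 0
  | S n', S k' => binom n' k' + binom n' (S k')
  end.

Lemma binom_over n k : n < k -> binom n k = 0.
Proof. revert k; induction n; intros [|k] H; simpl; try lia. rewrite !IHn; lia. Qed.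

Lemma binom_0 n : binom n 0 = 1.
Proof. destruct n; reflexivity. Qed.

Lemma binom_fact n k : k <= n -> binom n k * fact k * fact (n - k) = fact n.
Proof.
  revert k; induction n; intros [|k] H; simpl; try lia.
  destruct (Nat.eq_dec k n) as [->|Hne].
  - rewrite (binom_over (n:=n) (k:=S n)) by lia. rewrite Nat.sub_diag.
    pose proof (IHn n (le_n n)) as E. rewrite Nat.sub_diag in E. simpl in *. nia.
  - pose proof (IHn k ltac:(lia)) as E1. pose proof (IHn (S k) ltac:(lia)) as E2.
    replace (n - k) with (S (n - S k)) in * by lia. simpl in *. nia.
Qed.

Definition Cbinom (n k : nat) : C := RtoC (INR (binom n k)).

(* One step of (lambda + N)^j: the coefficient recursion behind Pascal's rule,
   for a sequence a_i standing for N^i v. *)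
Lemma binomial_step (lam : C) (a : nat -> C) j :
  sum_upto (fun i => Cmul (Cbinom j i) (Cmul (Cpow lam (j - i)) (Cadd (Cmul lam (a i)) (a (S i)))))
           (S j)
  = sum_upto (fun i => Cmul (Cbinom (S j) i) (Cmul (Cpow lam (S j - i)) (a i))) (S (S j)).
Proof.
  rewrite (sum_upto_shift (fun i => Cmul (Cbinom (S j) i) _)). cbn beta.
  rewrite (sum_upto_ext (fun i => Cmul (Cbinom (S j) (S i)) (Cmul (Cpow lam (S j - S i)) (a (S i))))
    (fun i => Cadd (Cmul (Cbinom j i) (Cmul (Cpow lam (j - i)) (a (S i))))
                   (Cmul (Cbinom j (S i)) (Cmul (Cpow lam (j - i)) (a (S i)))))).
  2:{ intros i _. unfold Cbinom. cbn [binom]. rewrite plus_INR, RtoC_add. simpl (S j - S i). ring. }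
  rewrite sum_upto_add.
  rewrite (sum_upto_ext
    (fun i => Cmul (Cbinom j i) (Cmul (Cpow lam (j - i)) (Cadd (Cmul lam (a i)) (a (S i)))))
    (fun i => Cadd (Cmul (Cbinom j i) (Cmul (Cpow lam (j - i)) (Cmul lam (a i))))
                   (Cmul (Cbinom j i) (Cmul (Cpow lam (j - i)) (a (S i)))))) by (intros; ring).
  rewrite sum_upto_add.
  assert (E :
    sum_upto (fun i => Cmul (Cbinom j i) (Cmul (Cpow lam (j - i)) (Cmul lam (a i)))) (S j) =
    Cadd (Cmul (Cbinom (S j) 0) (Cmul (Cpow lam (S j - 0)) (a 0)))
         (sum_upto (fun i => Cmul (Cbinom j (S i)) (Cmul (Cpow lam (j - i)) (a (S i)))) (S j))).
  { rewrite sum_upto_shift. cbn [sum_upto].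
    replace (Cbinom j (S j)) with C0 by (unfold Cbinom; rewrite binom_over by lia; reflexivity).
    f_equal.
    - unfold Cbinom; rewrite !binom_0, Nat.sub_0_r. change (RtoC (INR 1)) with C1. simpl. ring.
    - rewrite sum_upto_ext
        with (g := fun i => Cmul (Cbinom j (S i)) (Cmul (Cpow lam (j - i)) (a (S i)))).
      + ring.
      + intros i Hi. replace (j - i) with (S (j - S i)) by lia. simpl. ring. }
  rewrite E. ring.
Qed.

Lemma sum_upto_triangle (x : nat -> nat -> C) N :
  sum_upto (fun j => sum_upto (fun i => x i (j - i)) (S j)) (S N) =
  sum_upto (fun i => sum_upto (fun m => x i m) (S N - i)) (S N).
Proof.
  induction N; [simpl; ring|].
  change (sum_upto (fun j => sum_upto (fun i => x i (j - i)) (S j)) (S (S N))) with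
    (Cadd (sum_upto (fun j => sum_upto (fun i => x i (j - i)) (S j)) (S N))
          (sum_upto (fun i => x i (S N - i)) (S (S N)))).
  rewrite IHN.
  rewrite (sum_upto_ext (fun i => sum_upto (fun m => x i m) (S (S N) - i))
     (fun i => Cadd (sum_upto (fun m => x i m) (S N - i)) (x i (S N - i)))).
  2:{ intros i Hi. replace (S (S N) - i) with (S (S N - i)) by lia. reflexivity. }
  rewrite sum_upto_add. f_equal.
  change (sum_upto (fun i => sum_upto (fun m => x i m) (S N - i)) (S (S N))) with
    (Cadd (sum_upto (fun i => sum_upto (fun m => x i m) (S N - i)) (S N))
          (sum_upto (fun m => x (S N) m) (S N - S N))).
  rewrite Nat.sub_diag. simpl. ring.
Qed.

Lemma inv_fact_binom j i : i <= j ->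
  Cmul (RtoC (/ INR (fact j))) (Cbinom j i) =
  Cmul (RtoC (/ INR (fact i))) (RtoC (/ INR (fact (j - i)))).
Proof.
  intro H. unfold Cbinom. rewrite <- !RtoC_mul. f_equal.
  pose proof (binom_fact H) as E. apply (f_equal INR) in E. rewrite !mult_INR in E.
  pose proof (INR_fact_neq_0 j). pose proof (INR_fact_neq_0 i). pose proof (INR_fact_neq_0 (j - i)).
  rewrite <- E. field. repeat split; auto.
  intro Z; rewrite Z in E; apply H0; rewrite <- E; ring.
Qed.

Lemma binomial_exp_product (lam : C) (a : nat -> C) d : (forall i, d <= i -> a i = C0) ->
  Ccv (fun N => sum_upto (fun j => Cmul (RtoC (/ INR (fact j)))
          (sum_upto (fun i => Cmul (Cbinom j i) (Cmul (Cpow lam (j - i)) (a i))) (S j))) (S N))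
      (sum_upto (fun i => Cmul (RtoC (/ INR (fact i))) (Cmul (a i) (CExp lam))) d).
Proof.
  intro Ha. set (b := fun i => Cmul (RtoC (/ INR (fact i))) (a i)).
  apply (@Ccv_eventually
           (fun N => sum_upto (fun i => Cmul (b i) (sum_upto (exp_term lam) (S (N - i)))) d) _ _ d).
  - intros N HN.
    rewrite (sum_upto_ext _ (fun j => sum_upto (fun i => Cmul (b i) (exp_term lam (j - i))) (S j))).
    2:{ intros j _. rewrite <- sum_upto_mul. apply sum_upto_ext. intros i Hi. unfold b, exp_term.
        transitivity (Cmul (Cmul (RtoC (/ INR (fact j))) (Cbinom j i))
                           (Cmul (Cpow lam (j - i)) (a i))); [ring|].
        rewrite inv_fact_binom by lia. ring. }
    rewrite (sum_upto_triangle (fun i m => Cmul (b i) (exp_term lam m))).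
    rewrite (sum_upto_ext _ (fun i => Cmul (b i) (sum_upto (exp_term lam) (S N - i))))
      by (intros; apply sum_upto_mul).
    rewrite (sum_upto_truncate _ (n := S N) (d := d))
      by (lia || (intros i Hi; unfold b; rewrite Ha by lia; ring)).
    apply sum_upto_ext. intros i Hi. replace (S N - i) with (S (N - i)) by lia. reflexivity.
  - rewrite (sum_upto_ext (fun i => Cmul (RtoC (/ INR (fact i))) (Cmul (a i) (CExp lam)))
      (fun i => Cmul (b i) (CExp lam))) by (intros; unfold b; ring).
    apply Ccv_sum_upto with (F := fun i N => Cmul (b i) (sum_upto (exp_term lam) (S (N - i)))).
    intro i. apply Ccv_scale, (@Ccv_delay (fun N => sum_upto (exp_term lam) (S N))), CExp_spec.
Qed.

(** * The exponential identity *)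

Section Scaling.
Variables (Sp : StarProbSpace) (I : Type).

Definition scale_by (psi : key I -> C) (u : tpoly I) : tpoly I :=
  map (fun ck => (Cmul (fst ck) (psi (snd ck)), snd ck)) u.

Lemma pairing_scale_by psi G u :
  pairing G (scale_by psi u) = pairing (fun k => Cmul (psi k) (G k)) u.
Proof. unfold pairing, scale_by. rewrite map_map. apply Csum_map_ext. intros; simpl; ring. Qed.

Lemma coeff_scale_by psi u k : letter_invariant psi ->
  coeff (scale_by psi u) k = Cmul (psi k) (coeff u k).
Proof.
  intro Hp. rewrite !coeff_pairing, pairing_scale_by, <- pairing_scale. apply pairing_ext.
  intro key. unfold indicator. destruct excluded_middle_informative as [E|E]; [|ring].
  rewrite (Hp key k); [ring|]. apply Permutation_sym, key_equiv_letters; auto.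
Qed.

Lemma degree_bounded_scale_by psi d u : degree_bounded d u -> degree_bounded d (scale_by psi u).
Proof.
  intros H ck Hck. unfold scale_by in Hck.
  apply in_map_iff in Hck as [ck0 [<- H0]]. exact (H ck0 H0).
Qed.

Lemma tp_valid_scale_by psi u : tp_valid u -> tp_valid (scale_by psi u).
Proof.
  intros H ck Hck. unfold scale_by in Hck.
  apply in_map_iff in Hck as [ck0 [<- H0]]. exact (H ck0 H0).
Qed.

Lemma coeff_Dop_scale_by (Cf : I -> Sp) psi u k : letter_invariant psi ->
  coeff (Dop Sp Cf (scale_by psi u)) k = Cmul (psi k) (coeff (Dop Sp Cf u) k).
Proof.
  intro Hp. rewrite !coeff_Dop, pairing_scale_by, <- pairing_scale. apply pairing_ext. intro key.
  rewrite Cmul_comm, <- (cut_sum_indicator_letter_invariant Cf k key Hp). ring.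
Qed.

Lemma iter_Dop_scale_by (Cf : I -> Sp) psi u i : letter_invariant psi ->
  tp_eq (Nat.iter i (Dop Sp Cf) (scale_by psi u)) (scale_by psi (Nat.iter i (Dop Sp Cf) u)).
Proof.
  intros Hp. induction i; simpl; [intro; reflexivity|].
  intro k. rewrite (Dop_tp_eq IHi k), coeff_Dop_scale_by, coeff_scale_by; auto.
Qed.
End Scaling.

Section Exponential.
Variables (Sp : StarProbSpace) (I : Type) (A : I -> Sp).
Hypothesis hA : forall i, tau Sp (A i) <> C0.

Let lam := letter_log (tau_fam Sp A).
Let DA := Dop Sp A.
Let DtA := Dop Sp (tau_fam Sp A).
Let DnA := Dop Sp (norm_fam Sp A).

Lemma iter_Dtau j u k : coeff (Nat.iter j DtA u) k = Cmul (Cpow (lam k) j) (coeff u k).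
Proof. induction j; simpl; [ring|]. rewrite (coeff_Dtau Sp A hA), IHj. unfold lam; ring. Qed.

Lemma iter_Dnorm_Dtau i u k :
  coeff (Nat.iter i DnA (DtA u)) k = Cmul (lam k) (coeff (Nat.iter i DnA u) k).
Proof.
  revert k. induction i; intro k; simpl; [apply (coeff_Dtau Sp A hA)|].
  assert (E : tp_eq (Nat.iter i DnA (DtA u)) (DtA (Nat.iter i DnA u))).
  { intro k'. rewrite IHi, (coeff_Dtau Sp A hA). reflexivity. }
  unfold DnA at 1. rewrite (Dop_tp_eq E k). unfold DtA.
  rewrite <- (Dtau_commutes Sp A hA), (coeff_Dtau Sp A hA). reflexivity.
Qed.

Lemma iter_Dnorm_DA i u k : coeff (Nat.iter i DnA (DA u)) k =
  Cadd (Cmul (lam k) (coeff (Nat.iter i DnA u) k)) (coeff (Nat.iter (S i) DnA u) k).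
Proof.
  assert (E : tp_eq (DA u) (DtA u ++ DnA u)).
  { intro k'. rewrite coeff_app. apply (coeff_DA_split Sp A hA). }
  unfold DnA. rewrite (iter_Dop_tp_eq i E k), iter_Dop_app, coeff_app.
  fold DnA. rewrite iter_Dnorm_Dtau, Nat.iter_succ_r. reflexivity.
Qed.

(* D_A^j = (lambda + D_{A/tau(A)})^j, coefficientwise. *)
Lemma iter_DA_binomial j u k : coeff (Nat.iter j DA u) k =
  sum_upto (fun i => Cmul (Cbinom j i) (Cmul (Cpow (lam k) (j - i)) (coeff (Nat.iter i DnA u) k)))
           (S j).
Proof.
  revert u. induction j; intro u.
  - simpl. unfold Cbinom; simpl. change (RtoC 1) with C1. ring.
  - rewrite Nat.iter_succ_r, IHj.
    rewrite (sum_upto_ext _ (fun i => Cmul (Cbinom j i) (Cmul (Cpow (lam k) (j - i))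
        (Cadd (Cmul (lam k) ((fun i => coeff (Nat.iter i DnA u) k) i))
              ((fun i => coeff (Nat.iter i DnA u) k) (S i)))))).
    + apply binomial_step.
    + intros i _. rewrite iter_Dnorm_DA. reflexivity.
Qed.

Definition exp_lam (k : key I) : C := CExp (lam k).

Lemma exp_lam_invariant : letter_invariant exp_lam.
Proof.
  intros k1 k2 P. unfold exp_lam, lam. rewrite (letter_log_invariant k1 k2 P). reflexivity.
Qed.

Lemma exp_Dtau v : exp_series DtA v (scale_by exp_lam v).
Proof.
  intro k. unfold exp_partial. rewrite coeff_scale_by by apply exp_lam_invariant.
  apply (@Ccv_eventually (fun N => Cmul (coeff v k) (sum_upto (exp_term (lam k)) (S N))) _ _ 0).
  - intros N _. rewrite Csum_seq, <- sum_upto_mul. apply sum_upto_ext. intros j _.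
    rewrite iter_Dtau. unfold exp_term. ring.
  - rewrite Cmul_comm. apply Ccv_scale, CExp_spec.
Qed.

(* sum_{i <= d} D_{A/tau(A)}^i w / i!, which is e^{D_{A/tau(A)}} w by nilpotency. *)
Definition exp_Dnorm_trunc (d : nat) (w : tpoly I) : tpoly I :=
  concat (map (fun i => map (fun ck => (Cmul (RtoC (/ INR (fact i))) (fst ck), snd ck))
                            (Nat.iter i DnA w)) (seq 0 (S d))).

Lemma coeff_exp_Dnorm_trunc d w k : coeff (exp_Dnorm_trunc d w) k =
  sum_upto (fun i => Cmul (RtoC (/ INR (fact i))) (coeff (Nat.iter i DnA w) k)) (S d).
Proof.
  unfold exp_Dnorm_trunc. rewrite coeff_concat, map_map, Csum_seq.
  apply sum_upto_ext. intros i _. apply coeff_scale.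
Qed.

Lemma exp_Dnorm d w : degree_bounded d w -> exp_series DnA w (exp_Dnorm_trunc d w).
Proof.
  intros Hw k. unfold exp_partial.
  apply (@Ccv_eventually (fun _ => coeff (exp_Dnorm_trunc d w) k) _ _ d); [|apply Ccv_const].
  intros N HN. rewrite Csum_seq, coeff_exp_Dnorm_trunc.
  apply sum_upto_truncate; [lia|]. intros i Hi.
  rewrite (Dnorm_nilpotent Sp A hA Hw) by lia. ring.
Qed.

Lemma exp_DA d v : degree_bounded d v ->
  exp_series DA v (exp_Dnorm_trunc d (scale_by exp_lam v)).
Proof.
  intros Hv k. unfold exp_partial.
  rewrite coeff_exp_Dnorm_trunc.
  rewrite (sum_upto_ext _ (fun i => Cmul (RtoC (/ INR (fact i)))
             (Cmul (coeff (Nat.iter i DnA v) k) (CExp (lam k))))).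
  2:{ intros i _. unfold DnA. rewrite (iter_Dop_scale_by _ _ _ _ exp_lam_invariant k).
      rewrite coeff_scale_by by apply exp_lam_invariant. unfold exp_lam. ring. }
  apply (@Ccv_eventually (fun N => sum_upto (fun j => Cmul (RtoC (/ INR (fact j)))
      (sum_upto (fun i => Cmul (Cbinom j i)
                   (Cmul (Cpow (lam k) (j - i)) (coeff (Nat.iter i DnA v) k))) (S j)))
      (S N)) _ _ 0).
  - intros N _. rewrite Csum_seq. apply sum_upto_ext. intros j _.
    rewrite iter_DA_binomial. reflexivity.
  - apply binomial_exp_product. intros i Hi. apply (Dnorm_nilpotent Sp A hA Hv). lia.
Qed.
End Exponential.

Lemma tp_valid_degree_bounded I (v : tpoly I) : tp_valid v ->
  exists d, degree_bounded d v.
Proof.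
  intro Hv. set (L := map (fun ck => length (letters (snd ck))) v). exists (list_max L).
  intros ck Hck. split; [intros M HM; apply (Hv ck Hck M HM)|].
  pose proof (proj1 (list_max_le L (list_max L)) (le_n _)) as Hmax.
  rewrite Forall_forall in Hmax. apply Hmax, in_map_iff. eauto.
Qed.

Theorem proposition2p14 (Sp : StarProbSpace) (I : Type) (A B : I -> Sp)
  (hA : forall i, @tau Sp (A i) <> C0) (hB : forall i, @tau Sp (B i) <> C0) :
  let DA := @Dop Sp I A in
  let DtA := @Dop Sp I (@tau_fam Sp I A) in
  let DtB := @Dop Sp I (@tau_fam Sp I B) in
  let DnA := @Dop Sp I (@norm_fam Sp I A) in
  commutes DtA DtB /\ commutes DtA DnA /\ commutes DtB DnA /\
  (forall v, tp_valid v -> tp_eq (DA v) (DtA v ++ DnA v)) /\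
  (forall v, tp_valid v -> exists w1 w2,
      tp_valid w1 /\ exp_series DtA v w1 /\ exp_series DnA w1 w2 /\
      exp_series DA v w2).
Proof.
  cbv zeta. split; [|split; [|split; [|split]]].
  - intros v _ k. apply (Dtau_commutes Sp A hA).
  - intros v _ k. apply (Dtau_commutes Sp A hA).
  - intros v _ k. apply (Dtau_commutes Sp B hB).
  - intros v _ k. rewrite coeff_app. apply (coeff_DA_split Sp A hA).
  - intros v Hv. destruct (tp_valid_degree_bounded Hv) as [d Hd].
    set (w1 := scale_by (exp_lam Sp A) v).
    exists w1, (exp_Dnorm_trunc Sp A d w1). split; [|split; [|split]].
    + apply tp_valid_scale_by, Hv.
    + apply exp_Dtau, hA.
    + apply exp_Dnorm; [exact hA|apply degree_bounded_scale_by, Hd].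
    + apply exp_DA; assumption.
Qed.
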